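(* Let $L=\mathbb Z^3\subset\mathbb R^3$ with $B(x,y)=xGy^T$, $G=\begin{pmatrix}2&-1&0\\-1&2&-1\\0&-1&2\end{pmatrix}$ (the $A_3$ lattice), $Q(x)=\frac12B(x,x)$, and for $\alpha,\beta\in\mathbb Q^3$ put $\theta_{\alpha,\beta}(\tau,z)=\sum_{v\in\mathbb Z^3}e(B(\beta,v))\,e(\tau Q(\alpha+v)+B(\alpha+v,z))$ on $\mathbb H\times\mathbb C^3$. Let $A=\{(0,0,0),(\frac12,0,\frac12)\}$ and $\mathcal B=\{(0,0,0),(0,\frac12,0),(\frac12,0,0),(\frac12,\frac12,0)\}$. Then the five functions $\theta_{\alpha,0}^2$ ($\alpha\in A$), $\theta_{0,\beta}^2$ ($\beta\in\mathcal B$) are $\mathbb C$-linearly independent, and for any $\alpha\in A$, $\beta\in\mathcal B$, $$\theta_{\alpha,\beta}^2+\theta_{0,0}^2=\theta_{\alpha,0}^2+\theta_{0,\beta}^2.$$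
   Context: $e(x)=\exp(2\pi ix)$, $\mathbb H$ the upper half plane; $B$ is extended bilinearly to $\mathbb C^3$. *)

From Stdlib Require Import Reals ZArith List.
From Coquelicot Require Import Coquelicot.
Open Scope R_scope.

Definition C3 : Type := (C * C * C)%type.

Definition C3add (x y : C3) : C3 :=
  let '(x1, x2, x3) := x in let '(y1, y2, y3) := y in
  (Cplus x1 y1, Cplus x2 y2, Cplus x3 y3).

Definition Gmat (i j : nat) : R :=
  match i, j with
  | 0%nat, 0%nat | 1%nat, 1%nat | 2%nat, 2%nat => 2
  | 0%nat, 1%nat | 1%nat, 0%nat | 1%nat, 2%nat | 2%nat, 1%nat => -1
  | _, _ => 0
  end.

Definition C3nth (x : C3) (i : nat) : C :=
  let '(x1, x2, x3) := x in
  match i with 0%nat => x1 | 1%nat => x2 | _ => x3 end.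

Definition Bform (x y : C3) : C :=
  fold_right Cplus (RtoC 0)
    (map (fun i => fold_right Cplus (RtoC 0)
       (map (fun j => Cmult (Cmult (C3nth x i) (RtoC (Gmat i j))) (C3nth y j))
            (seq 0 3)))
     (seq 0 3)).

Definition Qform (x : C3) : C := Cmult (RtoC (1/2)) (Bform x x).

Definition cexp (w : C) : C :=
  Cmult (RtoC (exp (Re w))) (cos (Im w), sin (Im w)).

Definition ee (x : C) : C := cexp (Cmult (Cmult (RtoC (2 * PI)) Ci) x).

Definition Zvec (a b c : Z) : C3 := (RtoC (IZR a), RtoC (IZR b), RtoC (IZR c)).

Definition theta_term (al be : C3) (tau : C) (z : C3) (v : C3) : C :=
  Cmult (ee (Bform be v))
        (ee (Cplus (Cmult tau (Qform (C3add al v))) (Bform (C3add al v) z))).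

Definition Zrange (N : nat) : list Z :=
  map (fun k => (Z.of_nat k - Z.of_nat N)%Z) (seq 0 (2 * N + 1)).

Definition Csum (l : list C) : C := fold_right Cplus (RtoC 0) l.

Definition theta_partial (al be : C3) (tau : C) (z : C3) (N : nat) : C :=
  Csum (map (fun a => Csum (map (fun b => Csum (map (fun c =>
    theta_term al be tau z (Zvec a b c)) (Zrange N))) (Zrange N))) (Zrange N)).

(* theta_{alpha,beta}(tau,z) = sum over v in Z^3 (absolutely convergent on H x C^3),
   computed as the limit of the cube partial sums, componentwise. *)
Definition theta (al be : C3) (tau : C) (z : C3) : C :=
  (real (Lim_seq (fun N => Re (theta_partial al be tau z N))),
   real (Lim_seq (fun N => Im (theta_partial al be tau z N)))).

Definition zero3 : C3 := (RtoC 0, RtoC 0, RtoC 0).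
Definition half : C := RtoC (1/2).

Definition setA : list C3 := zero3 :: (half, RtoC 0, half) :: nil.
Definition setB : list C3 :=
  zero3 :: (RtoC 0, half, RtoC 0) :: (half, RtoC 0, RtoC 0) :: (half, half, RtoC 0) :: nil.

Definition sq (w : C) : C := Cmult w w.

From Stdlib Require Import Reals ZArith List Lra Lia Permutation.
From Coquelicot Require Import Coquelicot.
Import ListNotations.
Open Scope R_scope.

(* The theta series converge absolutely: on the cube [[-N, N]^n] the terms are dominated by
   [exp (-|v_1| - ... - |v_n|)], and the same bound controls the partial sums after reindexing by
   a bijection that moves points by a linear amount.

   Expanding the squares, [theta_{a,b}^2 - theta_{a,0}^2] is [-2] times the sum, over
   the pairs [(v, w)] with [B(2b, v + w)] odd, of [e(tau (Q(a + v) + Q(a + w)) + B(2a + v + w, z))].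
   For each [b] in [B] there is an isometry [M] of [Q] such that [p + q = v + w + 2a],
   [p - q = M (v - w)] defines a bijection between these pairs for the characteristics [a] and [0];
   by the parallelogram law it preserves the summands.

   At [tau = i t] and [z = mu / 2], [mu] in [{0, (0,1,0), (1,0,0), (1,1,0)}], all
   five theta values are real.  With [q = e^{-2 pi t}] one has
   [theta_{0,b}^2 = c_0^2 + 2 c_0 c_4 q + O(q^2)] and [theta_{a,0}^2 = m^2 q + O(q^2)], where the
   coefficients are signed counts of short lattice vectors; the eight linear equations obtained
   from the constant and linear terms force the coefficients of the relation to vanish. *)

Definition csum {A} (f : A -> C) (l : list A) : C := Csum (map f l).
Definition rsum {A} (f : A -> R) (l : list A) : R := fold_right Rplus 0 (map f l).

Section FiniteSums.
Context {A : Type}.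

Lemma csum_cons (f : A -> C) x l : csum f (x :: l) = Cplus (f x) (csum f l).
Proof. reflexivity. Qed.

Lemma rsum_cons (f : A -> R) x l : rsum f (x :: l) = f x + rsum f l.
Proof. reflexivity. Qed.

Lemma csum_app (f : A -> C) l1 l2 : csum f (l1 ++ l2) = Cplus (csum f l1) (csum f l2).
Proof.
  induction l1 as [|x l IH]; simpl.
  - unfold csum; simpl. ring.
  - rewrite !csum_cons, IH. ring.
Qed.

Lemma rsum_app (f : A -> R) l1 l2 : rsum f (l1 ++ l2) = rsum f l1 + rsum f l2.
Proof.
  induction l1 as [|x l IH]; simpl.
  - unfold rsum; simpl. ring.
  - rewrite !rsum_cons, IH. ring.
Qed.

Lemma csum_ext (f g : A -> C) l : (forall x, In x l -> f x = g x) -> csum f l = csum g l.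
Proof.
  intros H. unfold csum. f_equal. apply map_ext_in. exact H.
Qed.

Lemma rsum_ext (f g : A -> R) l : (forall x, In x l -> f x = g x) -> rsum f l = rsum g l.
Proof.
  intros H. unfold rsum. f_equal. apply map_ext_in. exact H.
Qed.

Lemma rsum_le (f g : A -> R) l : (forall x, In x l -> f x <= g x) -> rsum f l <= rsum g l.
Proof.
  induction l as [|x l IH]; intros H; [unfold rsum; simpl; lra|].
  rewrite !rsum_cons. apply Rplus_le_compat; [|apply IH]; intros; apply H; simpl; auto.
Qed.

Lemma rsum_const0 l : rsum (fun _ : A => 0) l = 0.
Proof. induction l as [|x l IH]; [reflexivity|]. rewrite rsum_cons, IH. ring. Qed.

Lemma rsum_nonneg (f : A -> R) l : (forall x, In x l -> 0 <= f x) -> 0 <= rsum f l.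
Proof. intros H. rewrite <- (rsum_const0 l). apply rsum_le. exact H. Qed.

Lemma csum_plus (f g : A -> C) l :
  csum (fun x => Cplus (f x) (g x)) l = Cplus (csum f l) (csum g l).
Proof. induction l; [unfold csum; simpl; ring|]. rewrite !csum_cons, IHl. ring. Qed.

Lemma rsum_plus (f g : A -> R) l : rsum (fun x => f x + g x) l = rsum f l + rsum g l.
Proof. induction l; [unfold rsum; simpl; ring|]. rewrite !rsum_cons, IHl. ring. Qed.

Lemma csum_scal (f : A -> C) c l : csum (fun x => Cmult c (f x)) l = Cmult c (csum f l).
Proof. induction l; [unfold csum; simpl; ring|]. rewrite !csum_cons, IHl. ring. Qed.

Lemma rsum_scal (f : A -> R) c l : rsum (fun x => c * f x) l = c * rsum f l.
Proof. induction l; [unfold rsum; simpl; ring|]. rewrite !rsum_cons, IHl. ring. Qed.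

Lemma csum_opp (f : A -> C) l : csum (fun x => Copp (f x)) l = Copp (csum f l).
Proof. induction l; [unfold csum; simpl; ring|]. rewrite !csum_cons, IHl. ring. Qed.

Lemma csum_RtoC (f : A -> R) l : csum (fun x => RtoC (f x)) l = RtoC (rsum f l).
Proof.
  induction l as [|x l IH]; [reflexivity|].
  rewrite csum_cons, rsum_cons, IH. unfold RtoC, Cplus. simpl. f_equal. ring.
Qed.

Lemma Cmod_csum_le (f : A -> C) l : Cmod (csum f l) <= rsum (fun x => Cmod (f x)) l.
Proof.
  induction l as [|x l IH].
  - unfold csum, rsum. simpl. rewrite Cmod_0. lra.
  - rewrite csum_cons, rsum_cons. eapply Rle_trans; [apply Cmod_triangle|]. lra.
Qed.

Lemma Rabs_rsum_le (f : A -> R) l : Rabs (rsum f l) <= rsum (fun x => Rabs (f x)) l.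
Proof.
  induction l as [|x l IH].
  - unfold rsum. simpl. rewrite Rabs_R0. lra.
  - rewrite !rsum_cons. eapply Rle_trans; [apply Rabs_triang|]. lra.
Qed.

Lemma csum_perm (f : A -> C) l1 l2 : Permutation l1 l2 -> csum f l1 = csum f l2.
Proof.
  induction 1; auto.
  - rewrite !csum_cons, IHPermutation. reflexivity.
  - rewrite !csum_cons. ring.
  - congruence.
Qed.

Lemma rsum_perm (f : A -> R) l1 l2 : Permutation l1 l2 -> rsum f l1 = rsum f l2.
Proof.
  induction 1; auto.
  - rewrite !rsum_cons, IHPermutation. reflexivity.
  - rewrite !rsum_cons. ring.
  - congruence.
Qed.

Lemma csum_filter (P : A -> bool) (f : A -> C) l :
  csum (fun x => if P x then f x else RtoC 0) l = csum f (filter P l).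
Proof.
  induction l as [|x l IH]; [reflexivity|]. simpl. rewrite csum_cons. destruct (P x).
  - rewrite csum_cons, IH. reflexivity.
  - rewrite IH. ring.
Qed.

End FiniteSums.

Lemma csum_map {A B} (f : B -> C) (g : A -> B) l : csum f (map g l) = csum (fun x => f (g x)) l.
Proof. unfold csum. rewrite map_map. reflexivity. Qed.

Lemma csum_flat_map {A B} (f : B -> C) (g : A -> list B) l :
  csum f (flat_map g l) = csum (fun x => csum f (g x)) l.
Proof.
  induction l as [|x l IH]; [reflexivity|].
  simpl. rewrite csum_app, IH. reflexivity.
Qed.

Lemma rsum_flat_map {A B} (f : B -> R) (g : A -> list B) l :
  rsum f (flat_map g l) = rsum (fun x => rsum f (g x)) l.
Proof.
  induction l as [|x l IH]; [reflexivity|].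
  simpl. rewrite rsum_app, IH. reflexivity.
Qed.

Lemma rsum_map {A B} (f : B -> R) (g : A -> B) l : rsum f (map g l) = rsum (fun x => f (g x)) l.
Proof. unfold rsum. rewrite map_map. reflexivity. Qed.

Definition memb (L : list (list Z)) (l : list Z) : bool :=
  if in_dec (list_eq_dec Z.eq_dec) l L then true else false.

Lemma memb_spec L l : reflect (In l L) (memb L l).
Proof. unfold memb. destruct (in_dec _ l L); constructor; auto. Qed.

Lemma csum_restrict (F : list Z -> C) L1 L2 : NoDup L1 -> NoDup L2 -> incl L1 L2 ->
  csum (fun l => if memb L1 l then F l else RtoC 0) L2 = csum F L1.
Proof.
  intros N1 N2 I. rewrite csum_filter. apply csum_perm.
  apply NoDup_Permutation; [apply NoDup_filter; auto|auto|].
  intros x. rewrite filter_In. destruct (memb_spec L1 x); split; intros H; auto.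
  destruct H; discriminate.
Qed.

Lemma rsum_restrict (g : list Z -> R) L1 L2 : NoDup L1 -> NoDup L2 -> incl L1 L2 ->
  rsum (fun l => if memb L1 l then g l else 0) L2 = rsum g L1.
Proof.
  intros N1 N2 I. pose proof (csum_restrict (fun l => RtoC (g l)) L1 L2 N1 N2 I) as E.
  rewrite csum_RtoC, <- (csum_ext (fun l => RtoC (if memb L1 l then g l else 0))) in E.
  - rewrite csum_RtoC in E. injection E; auto.
  - intros l _. destruct (memb L1 l); reflexivity.
Qed.

Lemma in_Zrange N x : In x (Zrange N) <-> (- Z.of_nat N <= x <= Z.of_nat N)%Z.
Proof.
  unfold Zrange. rewrite in_map_iff. split.
  - intros [k [<- Hk]]. apply in_seq in Hk. lia.
  - intros H. exists (Z.to_nat (x + Z.of_nat N)). split; [lia|]. apply in_seq. lia.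
Qed.

Lemma NoDup_Zrange N : NoDup (Zrange N).
Proof.
  unfold Zrange. apply FinFun.Injective_map_NoDup; [|apply seq_NoDup].
  intros a b H. lia.
Qed.

Lemma Zrange_S N :
  Permutation (Zrange (S N)) ((- Z.of_nat (S N))%Z :: Z.of_nat (S N) :: Zrange N).
Proof.
  apply NoDup_Permutation; [apply NoDup_Zrange| |].
  - constructor; [|constructor; [|apply NoDup_Zrange]].
    + intros [H|H]; [lia|]. apply in_Zrange in H. lia.
    + intros H. apply in_Zrange in H. lia.
  - intros x. rewrite in_Zrange. simpl. rewrite in_Zrange. lia.
Qed.

Fixpoint cube (n N : nat) : list (list Z) :=
  match n with
  | O => [nil]
  | S n => flat_map (fun x => map (cons x) (cube n N)) (Zrange N)
  end.

Lemma in_cube n N l :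
  In l (cube n N) <-> length l = n /\ List.Forall (fun x => (- Z.of_nat N <= x <= Z.of_nat N)%Z) l.
Proof.
  revert l; induction n as [|n IH]; intros l; simpl.
  - split.
    + intros [<-|[]]. auto.
    + intros [H _]. destruct l; [auto|discriminate].
  - rewrite in_flat_map. split.
    + intros [x [Hx Hl]]. apply in_map_iff in Hl. destruct Hl as [l' [<- Hl']].
      apply IH in Hl'. apply in_Zrange in Hx. simpl. intuition.
    + intros [Hlen HF]. destruct l as [|x l]; [discriminate|].
      inversion HF; subst. exists x. split; [apply in_Zrange; auto|].
      apply in_map. apply IH. simpl in Hlen. auto.
Qed.

Lemma cube_length n N l : In l (cube n N) -> length l = n.
Proof. rewrite in_cube. tauto. Qed.

Lemma NoDup_cube n N : NoDup (cube n N).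
Proof.
  induction n as [|n IH]; simpl.
  - repeat constructor. auto.
  - generalize (NoDup_Zrange N). induction 1 as [|x L Hx HL IHL]; simpl; [constructor|].
    apply NoDup_app; auto.
    + apply FinFun.Injective_map_NoDup; auto. intros a b E. injection E; auto.
    + intros l H1 H2. apply in_map_iff in H1. destruct H1 as [l1 [<- _]].
      apply in_flat_map in H2. destruct H2 as [y [Hy H2]]. apply in_map_iff in H2.
      destruct H2 as [l2 [E _]]. injection E; intros; subst. contradiction.
Qed.

Lemma cube_incl n N M : (N <= M)%nat -> incl (cube n N) (cube n M).
Proof.
  intros HNM l. rewrite !in_cube. intros [Hl HF]. split; auto.
  eapply List.Forall_impl; [|exact HF]. intros x. simpl. lia.
Qed.

Lemma csum_cube_S (f : list Z -> C) n N :
  csum f (cube (S n) N) = csum (fun x => csum (fun l => f (x :: l)) (cube n N)) (Zrange N).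
Proof. simpl. rewrite csum_flat_map. apply csum_ext. intros. apply csum_map. Qed.

Lemma rsum_cube_S (f : list Z -> R) n N :
  rsum f (cube (S n) N) = rsum (fun x => rsum (fun l => f (x :: l)) (cube n N)) (Zrange N).
Proof. simpl. rewrite rsum_flat_map. apply rsum_ext. intros. apply rsum_map. Qed.

Lemma csum_cube_add (F : list Z -> C) n m N :
  csum F (cube (n + m) N) = csum (fun l1 => csum (fun l2 => F (l1 ++ l2)) (cube m N)) (cube n N).
Proof.
  revert F. induction n as [|n IH]; intros F.
  - change (csum F (cube m N) = Cplus (csum F (cube m N)) (RtoC 0)). ring.
  - change (S n + m)%nat with (S (n + m)). rewrite csum_cube_S, csum_cube_S.
    apply csum_ext. intros x _. apply IH.
Qed.

Lemma csum_cube_mul (f g : list Z -> C) n m N :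
  Cmult (csum f (cube n N)) (csum g (cube m N)) =
  csum (fun l => Cmult (f (firstn n l)) (g (skipn n l))) (cube (n + m) N).
Proof.
  rewrite csum_cube_add, Cmult_comm, <- csum_scal. apply csum_ext. intros l1 Hl1.
  rewrite Cmult_comm, <- csum_scal. apply csum_ext. intros l2 _.
  apply cube_length in Hl1. subst n.
  rewrite firstn_app, skipn_app, firstn_all, skipn_all, Nat.sub_diag, app_nil_r. simpl. ring.
Qed.

Definition weight (x : Z) : R := exp (- IZR (Z.abs x)).

Fixpoint cube_weight (l : list Z) : R :=
  match l with nil => 1 | x :: l => weight x * cube_weight l end.

Definition weight_beyond (k : nat) (x : Z) : R :=
  if Z_lt_dec (Z.of_nat k) (Z.abs x) then weight x else 0.

Definition weight_tail (k : nat) : R := 2 * exp (- INR k) / (exp 1 - 1).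

Definition weight_total : R := 1 + weight_tail 0.

Lemma exp_1_gt_1 : 1 < exp 1.
Proof. rewrite <- exp_0 at 1. apply exp_increasing. lra. Qed.

Lemma exp_le x y : x <= y -> exp x <= exp y.
Proof. intros [H|H]; [left; apply exp_increasing; exact H|subst; lra]. Qed.

Lemma weight_pos x : 0 < weight x.
Proof. apply exp_pos. Qed.

Lemma cube_weight_pos l : 0 < cube_weight l.
Proof. induction l; simpl; [lra|]. apply Rmult_lt_0_compat; auto. apply weight_pos. Qed.

Lemma cube_weight_app l1 l2 : cube_weight (l1 ++ l2) = cube_weight l1 * cube_weight l2.
Proof. induction l1; simpl; [ring|]. rewrite IHl1. ring. Qed.

Lemma weight_tail_pos k : 0 < weight_tail k.
Proof.
  unfold weight_tail. pose proof exp_1_gt_1. pose proof (exp_pos (- INR k)).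
  apply Rdiv_lt_0_compat; lra.
Qed.

Lemma weight_total_ge_1 : 1 <= weight_total.
Proof. unfold weight_total. pose proof (weight_tail_pos 0). lra. Qed.

Lemma rsum_Zrange_S f N :
  rsum f (Zrange (S N)) = f (- Z.of_nat (S N))%Z + f (Z.of_nat (S N)) + rsum f (Zrange N).
Proof. rewrite (rsum_perm _ _ _ (Zrange_S N)), !rsum_cons. ring. Qed.

Lemma rsum_weight_beyond_le k M :
  rsum (weight_beyond k) (Zrange M) <= weight_tail k.
Proof.
  pose proof exp_1_gt_1.
  (* the telescoping form of the geometric tail, which is what the induction on [M] preserves *)
  enough (Hb : rsum (weight_beyond k) (Zrange M)
              <= 2 * (exp (- INR k) - exp (- INR (Nat.max M k))) / (exp 1 - 1)).
  { eapply Rle_trans; [exact Hb|]. unfold weight_tail, Rdiv.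
    apply Rmult_le_compat_r; [left; apply Rinv_0_lt_compat; lra|].
    pose proof (exp_pos (- INR (Nat.max M k))). lra. }
  induction M as [|M IH].
  - unfold Zrange, rsum, weight_beyond. simpl. destruct (Z_lt_dec _ _); [lia|].
    replace (Nat.max 0 k) with k by lia. unfold Rdiv. lra.
  - rewrite rsum_Zrange_S. unfold weight_beyond at 1 2, weight.
    rewrite Z.abs_opp, Z.abs_eq, <- INR_IZR_INZ by lia.
    destruct (Z_lt_dec (Z.of_nat k) (Z.of_nat (S M))).
    + replace (Nat.max M k) with M in IH by lia. replace (Nat.max (S M) k) with (S M) by lia.
      rewrite S_INR in *. replace (- (INR M + 1)) with (- INR M + - (1)) by ring.
      rewrite exp_plus, exp_Ropp with (x := 1).
      assert (0 < exp (- INR M)) by apply exp_pos.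
      apply Rle_trans with (2 * exp (- INR M) * / exp 1
                            + 2 * (exp (- INR k) - exp (- INR M)) / (exp 1 - 1)); [lra|].
      apply Req_le. field. lra.
    + replace (Nat.max (S M) k) with k by lia. replace (Nat.max M k) with k in IH by lia. lra.
Qed.

Lemma rsum_weight_le M : rsum weight (Zrange M) <= weight_total.
Proof.
  assert (E : rsum weight (Zrange M) = 1 + rsum (weight_beyond 0) (Zrange M)).
  { induction M as [|M IH].
    - unfold rsum, Zrange, weight_beyond, weight. simpl. rewrite Ropp_0, exp_0. ring.
    - rewrite !rsum_Zrange_S, IH. unfold weight_beyond.
      destruct (Z_lt_dec (Z.of_nat 0) (Z.abs (- Z.of_nat (S M)))); [|lia].
      destruct (Z_lt_dec (Z.of_nat 0) (Z.abs (Z.of_nat (S M)))); [|lia]. ring. }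
  rewrite E. pose proof (rsum_weight_beyond_le 0 M). unfold weight_total. lra.
Qed.

Lemma rsum_cube_weight_le n M : rsum cube_weight (cube n M) <= weight_total ^ n.
Proof.
  induction n as [|n IH].
  - unfold rsum. simpl. lra.
  - rewrite rsum_cube_S. simpl cube_weight.
    apply Rle_trans with (rsum (fun x => weight_total ^ n * weight x) (Zrange M)).
    + apply rsum_le. intros x _. rewrite rsum_scal, Rmult_comm.
      apply Rmult_le_compat_r; [left; apply weight_pos|exact IH].
    + rewrite rsum_scal, Rmult_comm. simpl. apply Rmult_le_compat_r; [|apply rsum_weight_le].
      apply pow_le. pose proof weight_total_ge_1. lra.
Qed.

Definition cube_weight_outside (n k : nat) (l : list Z) : R :=
  if memb (cube n k) l then 0 else cube_weight l.

Lemma cube_weight_outside_cons n k x l :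
  cube_weight_outside (S n) k (x :: l)
  <= weight_beyond k x * cube_weight l + weight x * cube_weight_outside n k l.
Proof.
  unfold cube_weight_outside, weight_beyond. simpl cube_weight.
  pose proof (weight_pos x). pose proof (cube_weight_pos l).
  destruct (memb_spec (cube (S n) k) (x :: l)) as [I|I];
    destruct (Z_lt_dec _ _); destruct (memb_spec (cube n k) l) as [I2|I2]; try nra.
  exfalso. apply I. apply in_cube. apply in_cube in I2. destruct I2 as [Hl HF].
  split; [simpl; auto|]. constructor; auto. lia.
Qed.

Lemma rsum_cube_weight_outside_le n k M :
  rsum (cube_weight_outside n k) (cube n M) <= INR n * weight_tail k * weight_total ^ n.
Proof.
  pose proof weight_total_ge_1 as HS. pose proof (weight_tail_pos k) as HT.
  induction n as [|n IH].
  - unfold rsum, cube_weight_outside. simpl.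
    destruct (memb_spec [[]] []) as [_|H]; [simpl; lra|]. exfalso. apply H. simpl. auto.
  - set (W := rsum cube_weight (cube n M)) in *. set (O := rsum (cube_weight_outside n k) (cube n M)) in *.
    rewrite rsum_cube_S.
    apply Rle_trans with (rsum (fun x => W * weight_beyond k x + O * weight x) (Zrange M)).
    { apply rsum_le. intros x _. unfold W, O.
      rewrite (Rmult_comm (rsum cube_weight _)), (Rmult_comm (rsum (cube_weight_outside n k) _)).
      rewrite <- !rsum_scal, <- rsum_plus.
      apply rsum_le. intros l _. pose proof (cube_weight_outside_cons n k x l). lra. }
    rewrite rsum_plus, !rsum_scal.
    pose proof (rsum_weight_beyond_le k M). pose proof (rsum_weight_le M).
    assert (HW : W <= weight_total ^ n) by apply rsum_cube_weight_le.
    assert (0 <= rsum (weight_beyond k) (Zrange M)).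
    { apply rsum_nonneg. intros x _. unfold weight_beyond.
      destruct (Z_lt_dec _ _); [left; apply weight_pos|lra]. }
    assert (0 <= O).
    { apply rsum_nonneg. intros l _. unfold cube_weight_outside. pose proof (cube_weight_pos l).
      destruct (memb _ _); lra. }
    assert (0 <= W) by (apply rsum_nonneg; intros; left; apply cube_weight_pos).
    assert (1 <= weight_total ^ n) by (apply pow_R1_Rle; lra).
    pose proof (pos_INR n). rewrite S_INR. simpl pow.
    assert (W * rsum (weight_beyond k) (Zrange M) <= weight_total ^ n * weight_tail k)
      by (apply Rmult_le_compat; auto).
    assert (O * rsum weight (Zrange M) <= INR n * weight_tail k * weight_total ^ n * weight_total)
      by (apply Rmult_le_compat; auto; apply rsum_nonneg; intros; left; apply weight_pos).
    assert (weight_total ^ n * weight_tail k <= weight_tail k * (weight_total * weight_total ^ n))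
      by (rewrite (Rmult_comm (weight_tail k)); apply Rmult_le_compat_r; nra).
    lra.
Qed.

Lemma weight_tail_small K eps : 0 < eps ->
  exists k0, forall k, (k0 <= k)%nat -> K * weight_tail k < eps.
Proof.
  intros He. pose proof exp_1_gt_1.
  set (c := 2 * (Rabs K + 1) / (exp 1 - 1)).
  destruct (INR_archimed eps c He) as [k0 Hk0].
  exists k0. intros k Hk. apply le_INR in Hk.
  pose proof (exp_pos (INR k)). pose proof (weight_tail_pos k). pose proof (Rle_abs K).
  assert (Hexp : INR k < exp (INR k)) by (pose proof (exp_ineq1_le (INR k)); lra).
  assert (Hwt : (Rabs K + 1) * weight_tail k * exp (INR k) = c)
    by (unfold weight_tail, c; rewrite exp_Ropp; field; lra).
  assert (Hc : c < eps * exp (INR k)) by nra.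
  apply Rle_lt_trans with ((Rabs K + 1) * weight_tail k); [nra|].
  apply Rmult_lt_reg_r with (exp (INR k)); lra.
Qed.

Definition Clim (u : nat -> C) (x : C) : Prop :=
  is_lim_seq (fun N => Re (u N)) (Re x) /\ is_lim_seq (fun N => Im (u N)) (Im x).

Definition Clim_seq (u : nat -> C) : C :=
  (real (Lim_seq (fun N => Re (u N))), real (Lim_seq (fun N => Im (u N)))).

Lemma im_le_Cmod (c : C) : Rabs (Im c) <= Cmod c.
Proof.
  pose proof (Cmod2_alt c). pose proof (Cmod_ge_0 c). pose proof (pow2_ge_0 (Re c)).
  apply Rabs_le. split; nra.
Qed.

Lemma Clim_ext u v x : (forall N, u N = v N) -> Clim u x -> Clim v x.
Proof.
  intros E [H1 H2]. split; (eapply is_lim_seq_ext; [|eassumption]); intros N; simpl; rewrite E; reflexivity.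
Qed.

Lemma Clim_plus u v x y : Clim u x -> Clim v y -> Clim (fun N => Cplus (u N) (v N)) (Cplus x y).
Proof. intros [H1 H2] [H3 H4]. split; apply is_lim_seq_plus'; auto. Qed.

Lemma Clim_opp u x : Clim u x -> Clim (fun N => Copp (u N)) (Copp x).
Proof. intros [H1 H2]. split; simpl; [apply is_lim_seq_opp in H1|apply is_lim_seq_opp in H2]; auto. Qed.

Lemma Clim_mult u v x y : Clim u x -> Clim v y -> Clim (fun N => Cmult (u N) (v N)) (Cmult x y).
Proof.
  intros [H1 H2] [H3 H4]. split; simpl.
  - apply is_lim_seq_minus'; apply is_lim_seq_mult'; auto.
  - apply is_lim_seq_plus'; apply is_lim_seq_mult'; auto.
Qed.

Lemma Clim_unique u x y : Clim u x -> Clim u y -> x = y.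
Proof.
  intros [H1 H2] [H3 H4]. apply is_lim_seq_unique in H1, H2, H3, H4.
  destruct x as [x1 x2], y as [y1 y2]. simpl in *.
  rewrite H1 in H3. rewrite H2 in H4. injection H3. injection H4. intros -> ->. reflexivity.
Qed.

Lemma Clim_0 u :
  (forall eps, 0 < eps -> exists N0, forall N, (N0 <= N)%nat -> Cmod (u N) < eps) ->
  Clim u (RtoC 0).
Proof.
  intros H. split; simpl; apply is_lim_seq_spec; intros eps;
    destruct (H eps (cond_pos eps)) as [N0 HN0]; exists N0; intros N HN;
    specialize (HN0 N HN); rewrite Rminus_0_r.
  - eapply Rle_lt_trans; [apply re_le_Cmod|exact HN0].
  - eapply Rle_lt_trans; [apply im_le_Cmod|exact HN0].
Qed.

Lemma Clim_cauchy u :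
  (forall eps, 0 < eps ->
     exists N0, forall N M, (N0 <= N)%nat -> (N0 <= M)%nat -> Cmod (Cminus (u M) (u N)) < eps) ->
  Clim u (Clim_seq u).
Proof.
  intros H.
  assert (Hlim : forall v : nat -> R, ex_lim_seq_cauchy v -> is_lim_seq v (real (Lim_seq v))).
  { intros v Hv. apply ex_lim_seq_cauchy_corr in Hv. destruct Hv as [l Hl].
    rewrite (is_lim_seq_unique _ _ Hl). exact Hl. }
  split; apply Hlim; intros eps; destruct (H eps (cond_pos eps)) as [N0 HN0];
    exists N0; intros N M HN HM; eapply Rle_lt_trans; try exact (HN0 N M HN HM).
  - replace (Re (u N) - Re (u M)) with (Re (Cminus (u M) (u N)) * -1)
      by (destruct (u M), (u N); simpl; ring).
    rewrite Rabs_mult, Rabs_m1, Rmult_1_r. apply re_le_Cmod.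
  - replace (Im (u N) - Im (u M)) with (Im (Cminus (u M) (u N)) * -1)
      by (destruct (u M), (u N); simpl; ring).
    rewrite Rabs_mult, Rabs_m1, Rmult_1_r. apply im_le_Cmod.
Qed.

Definition dominated (n : nat) (F : list Z -> C) (D : R) : Prop :=
  forall l, length l = n -> Cmod (F l) <= D * cube_weight l.

Lemma dominated_mul (f g : list Z -> C) D1 D2 n m :
  dominated n f D1 -> dominated m g D2 -> 0 <= D1 -> 0 <= D2 ->
  dominated (n + m) (fun l => Cmult (f (firstn n l)) (g (skipn n l))) (D1 * D2).
Proof.
  intros Hf Hg H1 H2 l Hl. rewrite Cmod_mult.
  replace (cube_weight l) with (cube_weight (firstn n l) * cube_weight (skipn n l))
    by (rewrite <- cube_weight_app, firstn_skipn; reflexivity).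
  assert (Hf' := Hf (firstn n l) ltac:(rewrite length_firstn; lia)).
  assert (Hg' := Hg (skipn n l) ltac:(rewrite length_skipn; lia)).
  replace (D1 * D2 * (cube_weight (firstn n l) * cube_weight (skipn n l)))
    with ((D1 * cube_weight (firstn n l)) * (D2 * cube_weight (skipn n l))) by ring.
  apply Rmult_le_compat; auto; apply Cmod_ge_0.
Qed.

Section DominatedCubeSums.
Variables (n : nat) (F : list Z -> C) (D : R).
Hypotheses (HF : dominated n F D) (HD : 0 <= D).

Lemma Cmod_csum_outside_le (G : list Z -> C) k M :
  (forall l, In l (cube n M) -> Cmod (G l) <= D * cube_weight_outside n k l) ->
  Cmod (csum G (cube n M)) <= D * (INR n * weight_tail k * weight_total ^ n).
Proof.
  intros HG. eapply Rle_trans; [apply Cmod_csum_le|].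
  eapply Rle_trans; [|apply Rmult_le_compat_l; [exact HD|apply rsum_cube_weight_outside_le]].
  rewrite <- rsum_scal. apply rsum_le. exact HG.
Qed.

Lemma csum_cube_diff_le N M : (N <= M)%nat ->
  Cmod (Cminus (csum F (cube n M)) (csum F (cube n N)))
  <= D * (INR n * weight_tail N * weight_total ^ n).
Proof.
  intros HNM.
  replace (Cminus (csum F (cube n M)) (csum F (cube n N)))
    with (csum (fun l => if memb (cube n N) l then RtoC 0 else F l) (cube n M)).
  - apply Cmod_csum_outside_le. intros l Hl. unfold cube_weight_outside.
    destruct (memb _ _); [rewrite Cmod_0; lra|]. apply HF. eapply cube_length; eauto.
  - rewrite <- (csum_restrict F (cube n N) (cube n M)) by
      (apply NoDup_cube || apply cube_incl; auto).
    unfold Cminus. rewrite <- csum_opp, <- !csum_plus. apply csum_ext. intros l _.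
    destruct (memb _ _); ring.
Qed.

Lemma csum_cube_Clim : Clim (fun N => csum F (cube n N)) (Clim_seq (fun N => csum F (cube n N))).
Proof.
  apply Clim_cauchy. intros eps He.
  destruct (weight_tail_small (D * INR n * weight_total ^ n) eps He) as [k0 Hk0].
  exists k0. intros N M HN HM.
  assert (Hsym : forall a b, Cmod (Cminus a b) = Cmod (Cminus b a)).
  { intros a b. rewrite <- Cmod_opp. f_equal. unfold Cminus. ring. }
  destruct (Nat.le_ge_cases N M) as [HNM|HNM]; [|rewrite Hsym];
    (eapply Rle_lt_trans; [apply csum_cube_diff_le; exact HNM|]).
  - specialize (Hk0 N HN). lra.
  - specialize (Hk0 M HM). lra.
Qed.

Section Reindexing.
Variables (psi psi' : list Z -> list Z) (c d : nat).
Hypotheses (Hpsi'psi : forall l, psi' (psi l) = l)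
           (Hpsipsi' : forall l, length l = n -> psi (psi' l) = l)
           (Hpsi_cube : forall N l, In l (cube n N) -> In (psi l) (cube n (c * N + d)))
           (Hpsi'_cube : forall N l, In l (cube n N) -> In (psi' l) (cube n (c * N + d))).

(* both sums agree with the sum over [cube n k] up to the weight of the complement *)
Lemma csum_cube_reindex_le N k : (c * k + d <= N)%nat -> (k <= N)%nat ->
  Cmod (Cminus (csum (fun l => F (psi l)) (cube n N)) (csum F (cube n N)))
  <= 2 * (D * (INR n * weight_tail k * weight_total ^ n)).
Proof.
  intros Hk HkN.
  set (M := (c * N + d + N)%nat).
  set (L := map psi (cube n N)).
  assert (NL : NoDup L).
  { apply FinFun.Injective_map_NoDup; [|apply NoDup_cube].
    intros a b E. rewrite <- (Hpsi'psi a), <- (Hpsi'psi b), E. reflexivity. }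
  assert (IL : incl L (cube n M)).
  { intros l Hl. apply in_map_iff in Hl. destruct Hl as [l0 [<- Hl0]].
    eapply cube_incl; [|apply Hpsi_cube; eauto]. unfold M; lia. }
  assert (IK : forall l, In l (cube n k) -> In l L).
  { intros l Hl. apply in_map_iff. exists (psi' l). split.
    - apply Hpsipsi'. eapply cube_length; eauto.
    - eapply cube_incl; [|apply Hpsi'_cube; eauto]. lia. }
  assert (Hpsi_sum : Cmod (Cminus (csum (fun l => F (psi l)) (cube n N)) (csum F (cube n k)))
                     <= D * (INR n * weight_tail k * weight_total ^ n)).
  { replace (csum (fun l => F (psi l)) (cube n N))
      with (csum (fun l => if memb L l then F l else RtoC 0) (cube n M))
      by (rewrite csum_restrict by (auto; apply NoDup_cube); unfold L; apply csum_map).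
    replace (csum F (cube n k))
      with (csum (fun l => if memb (cube n k) l then F l else RtoC 0) (cube n M))
      by (apply csum_restrict; [apply NoDup_cube|apply NoDup_cube|apply cube_incl; unfold M; lia]).
    unfold Cminus. rewrite <- csum_opp, <- csum_plus.
    apply Cmod_csum_outside_le. intros l Hl. unfold cube_weight_outside.
    pose proof (cube_weight_pos l). pose proof (HF l (cube_length _ _ _ Hl)).
    destruct (memb_spec (cube n k) l) as [I|I].
    - destruct (memb_spec L l) as [_|I2]; [|exfalso; auto].
      replace (Cplus (F l) (Copp (F l))) with (RtoC 0) by ring. rewrite Cmod_0. lra.
    - destruct (memb L l).
      + replace (Cplus (F l) (Copp (RtoC 0))) with (F l) by ring. lra.
      + replace (Cplus (RtoC 0) (Copp (RtoC 0))) with (RtoC 0) by ring. rewrite Cmod_0. nra. }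
  pose proof (csum_cube_diff_le k N HkN) as Hsum.
  replace (Cminus (csum (fun l => F (psi l)) (cube n N)) (csum F (cube n N))) with
    (Cplus (Cminus (csum (fun l => F (psi l)) (cube n N)) (csum F (cube n k)))
           (Copp (Cminus (csum F (cube n N)) (csum F (cube n k))))) by (unfold Cminus; ring).
  eapply Rle_trans; [apply Cmod_triangle|]. rewrite Cmod_opp. lra.
Qed.

Lemma csum_cube_reindex_Clim :
  Clim (fun N => Cminus (csum (fun l => F (psi l)) (cube n N)) (csum F (cube n N))) (RtoC 0).
Proof.
  apply Clim_0. intros eps He.
  destruct (weight_tail_small (2 * D * INR n * weight_total ^ n) eps He) as [k0 Hk0].
  exists (c * k0 + d + k0)%nat. intros N HN.
  eapply Rle_lt_trans; [apply (csum_cube_reindex_le N k0); lia|].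
  specialize (Hk0 k0 (le_n k0)). lra.
Qed.

End Reindexing.
End DominatedCubeSums.

(** * Convergence of the theta series *)

Lemma ee_expand x :
  ee x = (exp (- (2 * PI * Im x)) * cos (2 * PI * Re x), exp (- (2 * PI * Im x)) * sin (2 * PI * Re x)).
Proof.
  destruct x as [a b]. unfold ee, cexp, Ci, RtoC, Cmult, Re, Im. simpl.
  replace (2 * PI * 0 - 0 * 1) with 0 by ring. replace (2 * PI * 1 + 0 * 0) with (2 * PI) by ring.
  replace (0 * a - 2 * PI * b) with (- (2 * PI * b)) by ring.
  replace (0 * b + 2 * PI * a) with (2 * PI * a) by ring.
  f_equal; ring.
Qed.

Lemma ee_add x y : Cmult (ee x) (ee y) = ee (Cplus x y).
Proof.
  rewrite !ee_expand. destruct x as [a b], y as [c d]. unfold Cmult, Cplus, Re, Im. simpl.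
  replace (- (2 * PI * (b + d))) with (- (2 * PI * b) + - (2 * PI * d)) by ring.
  replace (2 * PI * (a + c)) with (2 * PI * a + 2 * PI * c) by ring.
  rewrite exp_plus, cos_plus, sin_plus. f_equal; ring.
Qed.

Lemma Cmod_ee x : Cmod (ee x) = exp (- (2 * PI * Im x)).
Proof.
  rewrite ee_expand. unfold Cmod. simpl.
  set (e := exp _). set (c := cos _). set (s := sin _).
  replace (e * c * (e * c * 1) + e * s * (e * s * 1)) with (e * e * (s * s + c * c)) by ring.
  assert (Hsc : s * s + c * c = 1) by (pose proof (sin2_cos2 (2 * PI * Re x)); unfold Rsqr in *; auto).
  rewrite Hsc, Rmult_1_r, sqrt_square; [reflexivity|]. left; apply exp_pos.
Qed.

Lemma ee_real_imag x y : ee (x, y) = Cmult (RtoC (exp (- (2 * PI * y)))) (ee (RtoC x)).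
Proof.
  rewrite !ee_expand. simpl. rewrite Rmult_0_r, Ropp_0, exp_0.
  unfold RtoC, Cmult. simpl. f_equal; ring.
Qed.

Lemma ee_IZR (k : Z) : ee (RtoC (IZR k)) = RtoC 1.
Proof.
  assert (Hk : cos (2 * PI * IZR k) = 1 /\ sin (2 * PI * IZR k) = 0).
  { destruct (Z_le_gt_dec 0 k).
    - rewrite <- (Z2Nat.id k), <- INR_IZR_INZ by lia.
      replace (2 * PI * INR (Z.to_nat k)) with (0 + 2 * INR (Z.to_nat k) * PI) by ring.
      rewrite cos_period, sin_period, cos_0, sin_0. auto.
    - replace k with (- Z.of_nat (Z.to_nat (- k)))%Z by lia. rewrite opp_IZR, <- INR_IZR_INZ.
      replace (2 * PI * - INR (Z.to_nat (- k))) with (- (0 + 2 * INR (Z.to_nat (- k)) * PI)) by ring.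
      rewrite cos_neg, sin_neg, cos_period, sin_period, cos_0, sin_0. split; [auto|ring]. }
  rewrite ee_expand. simpl. destruct Hk as [-> ->].
  rewrite Rmult_0_r, Ropp_0, exp_0. unfold RtoC. f_equal; ring.
Qed.

Lemma ee_half_IZR (k : Z) : ee (RtoC (IZR k / 2)) = RtoC (if Z.even k then 1 else -1).
Proof.
  destruct (Z.Even_or_Odd k) as [[m ->]|[m ->]].
  - rewrite Z.even_even. replace (IZR (2 * m) / 2) with (IZR m) by (rewrite mult_IZR; field).
    apply ee_IZR.
  - rewrite Z.even_odd.
    replace (RtoC (IZR (2 * m + 1) / 2)) with (Cplus (RtoC (IZR m)) (RtoC (1 / 2)))
      by (rewrite plus_IZR, mult_IZR; unfold RtoC, Cplus; simpl; f_equal; field).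
    rewrite <- ee_add, ee_IZR, ee_expand. simpl.
    replace (2 * PI * (1 / 2)) with PI by field.
    rewrite cos_PI, sin_PI, Rmult_0_r, Ropp_0, exp_0.
    unfold RtoC, Cmult. simpl. f_equal; ring.
Qed.

Definition R3 : Type := (R * R * R)%type.
Definition rv (a : R3) : C3 := let '(a1, a2, a3) := a in (RtoC a1, RtoC a2, RtoC a3).
Definition Zr (a b c : Z) : R3 := (IZR a, IZR b, IZR c).
Definition add3 (a b : R3) : R3 :=
  let '(a1, a2, a3) := a in let '(b1, b2, b3) := b in (a1 + b1, a2 + b2, a3 + b3).
Definition sub3 (a b : R3) : R3 :=
  let '(a1, a2, a3) := a in let '(b1, b2, b3) := b in (a1 - b1, a2 - b2, a3 - b3).
Definition zre (z : C3) : R3 := let '(z1, z2, z3) := z in (Re z1, Re z2, Re z3).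
Definition zim (z : C3) : R3 := let '(z1, z2, z3) := z in (Im z1, Im z2, Im z3).

Definition Br (a y : R3) : R :=
  let '(a1, a2, a3) := a in let '(y1, y2, y3) := y in
  a1 * (2 * y1 - y2) + a2 * (- y1 + 2 * y2 - y3) + a3 * (- y2 + 2 * y3).
Definition Qr (a : R3) : R :=
  let '(a1, a2, a3) := a in a1 * a1 + a2 * a2 + a3 * a3 - a1 * a2 - a2 * a3.

Lemma Bform_rv a z : Bform (rv a) z = (Br a (zre z), Br a (zim z)).
Proof.
  destruct a as [[a1 a2] a3], z as [[[x1 y1] [x2 y2]] [x3 y3]].
  unfold Bform, rv, Br, zre, zim, Csum, C3nth, Gmat, RtoC, Cplus, Cmult, Re, Im. simpl.
  f_equal; ring.
Qed.

Lemma Bform_rv_rv a b : Bform (rv a) (rv b) = RtoC (Br a b).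
Proof.
  rewrite Bform_rv. destruct a as [[a1 a2] a3], b as [[b1 b2] b3].
  unfold zre, zim, rv, Br, RtoC. simpl. f_equal. ring.
Qed.

Lemma Qform_rv a : Qform (rv a) = RtoC (Qr a).
Proof.
  unfold Qform. rewrite Bform_rv_rv. destruct a as [[a1 a2] a3].
  unfold Br, Qr, RtoC, Cmult. simpl. f_equal; field.
Qed.

Lemma C3add_rv a b : C3add (rv a) (rv b) = rv (add3 a b).
Proof.
  destruct a as [[a1 a2] a3], b as [[b1 b2] b3].
  unfold C3add, rv, add3, RtoC, Cplus. simpl. repeat f_equal; ring.
Qed.

Lemma Br_add_l x y Y : Br (add3 x y) Y = Br x Y + Br y Y.
Proof. destruct x as [[? ?] ?], y as [[? ?] ?], Y as [[? ?] ?]. unfold Br, add3. ring. Qed.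

Lemma Qr_parallelogram x y : Qr x + Qr y = (Qr (add3 x y) + Qr (sub3 x y)) / 2.
Proof. destruct x as [[? ?] ?], y as [[? ?] ?]. unfold Qr, add3, sub3. field. Qed.

Definition theta_phase (a : R3) (tau : C) (z : C3) : C :=
  Cplus (Cmult tau (RtoC (Qr a))) (Br a (zre z), Br a (zim z)).

Lemma Im_theta_phase a tau z : Im (theta_phase a tau z) = Im tau * Qr a + Br a (zim z).
Proof. unfold theta_phase, Cplus, Cmult, RtoC, Im. simpl. ring. Qed.

Lemma theta_term_rv a b tau z v1 v2 v3 :
  theta_term (rv a) (rv b) tau z (Zvec v1 v2 v3) =
  Cmult (ee (RtoC (Br b (Zr v1 v2 v3)))) (ee (theta_phase (add3 a (Zr v1 v2 v3)) tau z)).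
Proof.
  unfold theta_term. change (Zvec v1 v2 v3) with (rv (Zr v1 v2 v3)).
  rewrite Bform_rv_rv, C3add_rv, Qform_rv, Bform_rv. reflexivity.
Qed.

Lemma Cmod_theta_term a b tau z v1 v2 v3 :
  Cmod (theta_term (rv a) (rv b) tau z (Zvec v1 v2 v3)) =
  exp (- (2 * PI * (Im tau * Qr (add3 a (Zr v1 v2 v3)) + Br (add3 a (Zr v1 v2 v3)) (zim z)))).
Proof.
  rewrite theta_term_rv, Cmod_mult, !Cmod_ee, Im_theta_phase. simpl Im.
  rewrite Rmult_0_r, Ropp_0, exp_0. ring.
Qed.

Lemma Qr_ge X1 X2 X3 : (X1 * X1 + X2 * X2 + X3 * X3) / 4 <= Qr (X1, X2, X3).
Proof.
  unfold Qr. pose proof (pow2_ge_0 (X1 - 2/3 * X2)). pose proof (pow2_ge_0 (X3 - 2/3 * X2)).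
  pose proof (pow2_ge_0 X2). nra.
Qed.

Lemma Br_ge X1 X2 X3 Y1 Y2 Y3 :
  - (2 * (Rabs Y1 + Rabs Y2 + Rabs Y3) * (Rabs X1 + Rabs X2 + Rabs X3)) <= Br (X1, X2, X3) (Y1, Y2, Y3).
Proof.
  unfold Br. set (K := 2 * (Rabs Y1 + Rabs Y2 + Rabs Y3)).
  assert (Hmul : forall x c, Rabs c <= K -> - (K * Rabs x) <= x * c).
  { intros x c Hc. pose proof (Rle_abs (- (x * c))). rewrite Rabs_Ropp, Rabs_mult in H.
    pose proof (Rabs_pos x). nra. }
  pose proof (Hmul X1 (2 * Y1 - Y2)). pose proof (Hmul X2 (- Y1 + 2 * Y2 - Y3)).
  pose proof (Hmul X3 (- Y2 + 2 * Y3)).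
  assert (Rabs (2 * Y1 - Y2) <= K /\ Rabs (- Y1 + 2 * Y2 - Y3) <= K /\ Rabs (- Y2 + 2 * Y3) <= K)
    by (unfold K, Rabs; repeat destruct Rcase_abs; lra).
  intuition lra.
Qed.

(* completing the square *)
Lemma quadratic_ge_abs y K X : 0 < y ->
  Rabs X - (2 * PI * K + 1) ^ 2 / (2 * PI * y) <= 2 * PI * (y * (X * X) / 4 - K * Rabs X).
Proof.
  intros Hy. pose proof PI_RGT_0.
  replace (X * X) with (Rabs X * Rabs X) by (rewrite <- Rabs_mult; apply Rabs_pos_eq; nra).
  assert (0 < 2 * PI * y) by nra.
  assert (2 * PI * (y * (Rabs X * Rabs X) / 4 - K * Rabs X)
          - (Rabs X - (2 * PI * K + 1) ^ 2 / (2 * PI * y))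
          = (PI * y * Rabs X - (2 * PI * K + 1)) ^ 2 / (2 * PI * y)) by (field; lra).
  assert (0 <= (PI * y * Rabs X - (2 * PI * K + 1)) ^ 2 / (2 * PI * y))
    by (apply Rdiv_le_0_compat; [apply pow2_ge_0|lra]).
  lra.
Qed.

Lemma exp_quadratic_dominated y Y a : 0 < y ->
  exists D, 0 <= D /\ forall v1 v2 v3,
    exp (- (2 * PI * (y * Qr (add3 a (Zr v1 v2 v3)) + Br (add3 a (Zr v1 v2 v3)) Y)))
    <= D * cube_weight [v1; v2; v3].
Proof.
  intros Hy. destruct Y as [[Y1 Y2] Y3], a as [[a1 a2] a3].
  set (K := 2 * (Rabs Y1 + Rabs Y2 + Rabs Y3)).
  set (c0 := (2 * PI * K + 1) ^ 2 / (2 * PI * y)).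
  exists (exp (3 * c0 + (Rabs a1 + Rabs a2 + Rabs a3))). split; [left; apply exp_pos|].
  intros v1 v2 v3. unfold cube_weight, weight. rewrite Rmult_1_r, <- !exp_plus, !abs_IZR.
  apply exp_le. unfold add3, Zr.
  set (X1 := a1 + IZR v1). set (X2 := a2 + IZR v2). set (X3 := a3 + IZR v3).
  pose proof (Qr_ge X1 X2 X3). pose proof (Br_ge X1 X2 X3 Y1 Y2 Y3). fold K in H0.
  pose proof (quadratic_ge_abs y K X1 Hy). pose proof (quadratic_ge_abs y K X2 Hy).
  pose proof (quadratic_ge_abs y K X3 Hy). fold c0 in H1, H2, H3.
  assert (Hv : forall a v, Rabs (IZR v) <= Rabs (a + IZR v) + Rabs a).
  { intros a v. replace (IZR v) with ((a + IZR v) + - a) at 1 by ring.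
    rewrite <- (Rabs_Ropp a). apply Rabs_triang. }
  pose proof (Hv a1 v1). pose proof (Hv a2 v2). pose proof (Hv a3 v3). pose proof PI_RGT_0.
  assert (y * Qr (X1, X2, X3) >= y * ((X1 * X1 + X2 * X2 + X3 * X3) / 4))
    by (apply Rle_ge, Rmult_le_compat_l; lra).
  fold X1 X2 X3 in H4, H5, H6. nra.
Qed.

Definition theta_summand (al be : C3) (tau : C) (z : C3) (l : list Z) : C :=
  match l with [v1; v2; v3] => theta_term al be tau z (Zvec v1 v2 v3) | _ => RtoC 0 end.

Lemma theta_partial_csum al be tau z N :
  theta_partial al be tau z N = csum (theta_summand al be tau z) (cube 3 N).
Proof.
  unfold theta_partial. rewrite csum_cube_S. apply csum_ext. intros a _.
  rewrite csum_cube_S. apply csum_ext. intros b _.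
  rewrite csum_cube_S. apply csum_ext. intros c _.
  unfold csum. simpl. ring.
Qed.

Lemma theta_summand_dominated a b tau z : 0 < Im tau ->
  exists D, 0 <= D /\ dominated 3 (theta_summand (rv a) (rv b) tau z) D.
Proof.
  intros Hy. destruct (exp_quadratic_dominated (Im tau) (zim z) a Hy) as [D [HD H]].
  exists D. split; auto. intros [|v1 [|v2 [|v3 [|]]]] Hl; try discriminate.
  unfold theta_summand. rewrite Cmod_theta_term. apply H.
Qed.

Lemma theta_Clim a b tau z : 0 < Im tau ->
  Clim (fun N => csum (theta_summand (rv a) (rv b) tau z) (cube 3 N)) (theta (rv a) (rv b) tau z).
Proof.
  intros Hy. destruct (theta_summand_dominated a b tau z Hy) as [D [HD Hdom]].
  replace (theta (rv a) (rv b) tau z)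
    with (Clim_seq (fun N => csum (theta_summand (rv a) (rv b) tau z) (cube 3 N))).
  - exact (csum_cube_Clim 3 _ D Hdom HD).
  - unfold theta, Clim_seq. f_equal; f_equal; apply Lim_seq_ext; intros N;
      rewrite theta_partial_csum; reflexivity.
Qed.

(** * The theta identity *)

Ltac zlia := Z.to_euclidean_division_equations; lia.

Definition Z3 : Type := (Z * Z * Z)%type.

Definition Bi (x y : Z3) : Z :=
  let '(x1, x2, x3) := x in let '(y1, y2, y3) := y in
  (x1 * (2 * y1 - y2) + x2 * (- y1 + 2 * y2 - y3) + x3 * (- y2 + 2 * y3))%Z.
Definition Qi (x : Z3) : Z :=
  let '(x1, x2, x3) := x in (x1 * x1 + x2 * x2 + x3 * x3 - x1 * x2 - x2 * x3)%Z.

Definition zopp (x : Z3) : Z3 := let '(x1, x2, x3) := x in (- x1, - x2, - x3)%Z.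
Definition bounded3 (K : Z) (x : Z3) : Prop :=
  let '(x1, x2, x3) := x in (- K <= x1 <= K /\ - K <= x2 <= K /\ - K <= x3 <= K)%Z.

(* [hz x] is the characteristic [x / 2] *)
Definition hz (x : Z3) : R3 := let '(x1, x2, x3) := x in (IZR x1 / 2, IZR x2 / 2, IZR x3 / 2).

Lemma Br_hz_Zr b v1 v2 v3 : Br (hz b) (Zr v1 v2 v3) = IZR (Bi b (v1, v2, v3)) / 2.
Proof.
  destruct b as [[b1 b2] b3]. unfold Br, hz, Zr, Bi.
  rewrite !plus_IZR, !mult_IZR, !minus_IZR, !plus_IZR, !opp_IZR, !mult_IZR. field.
Qed.

Lemma Zr_hz v1 v2 v3 : Zr v1 v2 v3 = hz (2 * v1, 2 * v2, 2 * v3)%Z.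
Proof. unfold Zr, hz. rewrite !mult_IZR. f_equal; [f_equal|]; field. Qed.

Lemma add3_hz x1 x2 x3 y1 y2 y3 :
  add3 (hz (x1, x2, x3)) (hz (y1, y2, y3)) = hz (x1 + y1, x2 + y2, x3 + y3)%Z.
Proof. unfold add3, hz. rewrite !plus_IZR. f_equal; [f_equal|]; field. Qed.

Lemma sub3_hz x1 x2 x3 y1 y2 y3 :
  sub3 (hz (x1, x2, x3)) (hz (y1, y2, y3)) = hz (x1 - y1, x2 - y2, x3 - y3)%Z.
Proof. unfold sub3, hz. rewrite !minus_IZR. f_equal; [f_equal|]; field. Qed.

Lemma Qr_hz x : Qr (hz x) = IZR (Qi x) / 4.
Proof. destruct x as [[x1 x2] x3]. unfold Qr, hz, Qi. rewrite !minus_IZR, !plus_IZR, !mult_IZR. field. Qed.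

Lemma Qi_double x1 x2 x3 : Qi (2 * x1, 2 * x2, 2 * x3)%Z = (4 * Qi (x1, x2, x3))%Z.
Proof. unfold Qi. ring. Qed.

Lemma Bi_add_r b x1 x2 x3 y1 y2 y3 :
  Bi b (x1 + y1, x2 + y2, x3 + y3)%Z = (Bi b (x1, x2, x3) + Bi b (y1, y2, y3))%Z.
Proof. destruct b as [[? ?] ?]. unfold Bi. ring. Qed.

Lemma ee_char_mul b v1 v2 v3 w1 w2 w3 :
  Cmult (ee (RtoC (Br (hz b) (Zr v1 v2 v3)))) (ee (RtoC (Br (hz b) (Zr w1 w2 w3)))) =
  RtoC (if Z.even (Bi b (v1 + w1, v2 + w2, v3 + w3)%Z) then 1 else -1).
Proof.
  rewrite ee_add, !Br_hz_Zr, <- ee_half_IZR, Bi_add_r, plus_IZR.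
  f_equal. unfold RtoC, Cplus. simpl. f_equal; field.
Qed.

Lemma ee_char_zero v1 v2 v3 : ee (RtoC (Br (hz (0, 0, 0)%Z) (Zr v1 v2 v3))) = RtoC 1.
Proof. rewrite Br_hz_Zr. simpl Bi. replace (IZR 0 / 2) with (IZR 0) by (simpl; field). apply ee_IZR. Qed.

Definition theta_pair (al be : C3) (tau : C) (z : C3) (l : list Z) : C :=
  Cmult (theta_summand al be tau z (firstn 3 l)) (theta_summand al be tau z (skipn 3 l)).

Lemma sq_csum_cube (f : list Z -> C) N :
  sq (csum f (cube 3 N)) = csum (fun l => Cmult (f (firstn 3 l)) (f (skipn 3 l))) (cube 6 N).
Proof. apply (csum_cube_mul f f 3 3 N). Qed.

(* [theta_{a,b}^2 - theta_{a,0}^2] is summed over the pairs (v, w) with [B(b, v + w)] odd *)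
Definition theta_pair_diff (a : R3) (b : Z3) (tau : C) (z : C3) (l : list Z) : C :=
  Cminus (theta_pair (rv a) (rv (hz b)) tau z l) (theta_pair (rv a) (rv (hz (0, 0, 0)%Z)) tau z l).

Lemma theta_pair_diff_eq a b tau z v1 v2 v3 w1 w2 w3 :
  theta_pair_diff a b tau z [v1; v2; v3; w1; w2; w3] =
  Cmult (RtoC (if Z.even (Bi b (v1 + w1, v2 + w2, v3 + w3)%Z) then 0 else -2))
        (ee (Cplus (theta_phase (add3 a (Zr v1 v2 v3)) tau z)
                   (theta_phase (add3 a (Zr w1 w2 w3)) tau z))).
Proof.
  unfold theta_pair_diff, theta_pair. cbn [firstn skipn theta_summand].
  rewrite !theta_term_rv, !ee_char_zero, <- ee_add.
  transitivity (Cmult (Cminus (Cmult (ee (RtoC (Br (hz b) (Zr v1 v2 v3))))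
                                     (ee (RtoC (Br (hz b) (Zr w1 w2 w3))))) (RtoC 1))
                      (Cmult (ee (theta_phase (add3 a (Zr v1 v2 v3)) tau z))
                             (ee (theta_phase (add3 a (Zr w1 w2 w3)) tau z)))); [ring|].
  rewrite ee_char_mul. f_equal. destruct (Z.even _); unfold RtoC, Cminus, Cplus, Copp; simpl;
    f_equal; ring.
Qed.

(* by the parallelogram law, [Q(x) + Q(y)] only depends on [x + y] and [Q(x - y)] *)
Lemma theta_phase_pair x y x' y' tau z :
  add3 x y = add3 x' y' -> Qr (sub3 x y) = Qr (sub3 x' y') ->
  Cplus (theta_phase x tau z) (theta_phase y tau z) = Cplus (theta_phase x' tau z) (theta_phase y' tau z).
Proof.
  intros Hs Hd.
  assert (E : forall u v, Cplus (theta_phase u tau z) (theta_phase v tau z) =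
    Cplus (Cmult tau (RtoC ((Qr (add3 u v) + Qr (sub3 u v)) / 2)))
          (Br (add3 u v) (zre z), Br (add3 u v) (zim z))).
  { intros u v. unfold theta_phase. rewrite <- Qr_parallelogram, !Br_add_l.
    destruct tau as [t1 t2]. unfold Cplus, Cmult, RtoC. simpl. f_equal; ring. }
  rewrite !E, Hs, Hd. reflexivity.
Qed.

Definition swap_list (b c : Z3) (M : Z3 -> Z3) (l : list Z) : list Z :=
  match l with
  | [v1; v2; v3; w1; w2; w3] =>
      if Z.even (Bi b (v1 + w1, v2 + w2, v3 + w3)) then l else
      let '(c1, c2, c3) := c in
      let '(e1, e2, e3) := M (v1 - w1, v2 - w2, v3 - w3) in
      [(v1 + w1 + c1 + e1) / 2; (v2 + w2 + c2 + e2) / 2; (v3 + w3 + c3 + e3) / 2;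
       (v1 + w1 + c1 - e1) / 2; (v2 + w2 + c2 - e2) / 2; (v3 + w3 + c3 - e3) / 2]
  | _ => l
  end%Z.

Record swap_data (b c : Z3) (M : Z3 -> Z3) : Prop := {
  swap_invol : forall x, M (M x) = x;
  swap_Qi : forall x, Qi (M x) = Qi x;
  swap_shift_even : Z.even (Bi b c) = true;
  swap_parity : forall s1 s2 s3 d1 d2 d3,
    Z.even (Bi b (s1, s2, s3)) = false ->
    ((d1 + s1) mod 2 = 0 /\ (d2 + s2) mod 2 = 0 /\ (d3 + s3) mod 2 = 0)%Z ->
    let '(c1, c2, c3) := c in
    let '(e1, e2, e3) := M (d1, d2, d3) in
    ((s1 + c1 + e1) mod 2 = 0 /\ (s2 + c2 + e2) mod 2 = 0 /\ (s3 + c3 + e3) mod 2 = 0)%Z;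
  swap_bound : forall K x, bounded3 K x -> bounded3 (3 * K) (M x);
  swap_shift_bound : bounded3 1 c }.

Lemma swap_data_opp b c M : swap_data b c M -> swap_data b (zopp c) M.
Proof.
  intros [Hinv HQ Heven Hpar Hbd Hc]. destruct c as [[c1 c2] c3]. split; auto.
  - simpl. rewrite Zeven_mod in *. apply Z.eqb_eq. apply Z.eqb_eq in Heven.
    unfold Bi in *. destruct b as [[b1 b2] b3]. zlia.
  - intros s1 s2 s3 d1 d2 d3 Hodd Hd. specialize (Hpar s1 s2 s3 d1 d2 d3 Hodd Hd).
    simpl. destruct (M (d1, d2, d3)) as [[e1 e2] e3]. zlia.
  - simpl in *. lia.
Qed.

Lemma zopp_involutive x : zopp (zopp x) = x.
Proof. destruct x as [[x1 x2] x3]. simpl. f_equal; [f_equal|]; lia. Qed.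

Lemma swap_list_cancel b c M : swap_data b c M ->
  forall l, swap_list b (zopp c) M (swap_list b c M l) = l.
Proof.
  intros [Hinv HQ Heven Hpar Hbd Hc] l.
  destruct l as [|v1 [|v2 [|v3 [|w1 [|w2 [|w3 [|]]]]]]]; try reflexivity.
  unfold swap_list at 2. destruct (Z.even (Bi b (v1 + w1, v2 + w2, v3 + w3)%Z)) eqn:E.
  - unfold swap_list. rewrite E. reflexivity.
  - destruct c as [[c1 c2] c3].
    specialize (Hpar (v1 + w1) (v2 + w2) (v3 + w3) (v1 - w1) (v2 - w2) (v3 - w3) E ltac:(zlia))%Z.
    destruct (M (v1 - w1, v2 - w2, v3 - w3)%Z) as [[e1 e2] e3] eqn:HM.
    unfold swap_list, zopp.
    replace (Bi b _) with (Bi b (c1, c2, c3) + Bi b (v1 + w1, v2 + w2, v3 + w3))%Z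
      by (rewrite <- Bi_add_r; f_equal; f_equal; [f_equal|]; zlia).
    rewrite Z.even_add, Heven, E. simpl.
    replace (_ - _, _ - _, _ - _)%Z with (e1, e2, e3) by (f_equal; [f_equal|]; zlia).
    rewrite <- HM, Hinv. repeat f_equal; zlia.
Qed.

Lemma swap_list_cube b c M : swap_data b c M ->
  forall N l, In l (cube 6 N) -> In (swap_list b c M l) (cube 6 (4 * N + 1)).
Proof.
  intros [Hinv HQ Heven Hpar Hbd Hc] N l Hl.
  pose proof (cube_length _ _ _ Hl) as Hlen.
  destruct l as [|v1 [|v2 [|v3 [|w1 [|w2 [|w3 [|]]]]]]]; try discriminate.
  apply in_cube in Hl. destruct Hl as [_ HF].
  repeat match goal with H : List.Forall _ (_ :: _) |- _ => inversion H; subst; clear H end.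
  unfold swap_list. destruct (Z.even (Bi b (v1 + w1, v2 + w2, v3 + w3)%Z)).
  - apply in_cube. split; [reflexivity|]. repeat constructor; lia.
  - destruct c as [[c1 c2] c3].
    destruct (M (v1 - w1, v2 - w2, v3 - w3)%Z) as [[e1 e2] e3] eqn:HM.
    assert (Hb : bounded3 (2 * Z.of_nat N) (v1 - w1, v2 - w2, v3 - w3)%Z) by (unfold bounded3; lia).
    apply Hbd in Hb. rewrite HM in Hb. unfold bounded3 in Hb, Hc.
    apply in_cube. split; [reflexivity|]. repeat constructor; zlia.
Qed.

Lemma theta_pair_diff_swap a b M tau z : swap_data b a M ->
  forall l, length l = 6%nat ->
  theta_pair_diff (hz a) b tau z l = theta_pair_diff (hz (0, 0, 0)%Z) b tau z (swap_list b a M l).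
Proof.
  intros [Hinv HQ Heven Hpar Hbd Hc] l Hl.
  destruct l as [|v1 [|v2 [|v3 [|w1 [|w2 [|w3 [|]]]]]]]; try discriminate.
  unfold swap_list. destruct (Z.even (Bi b (v1 + w1, v2 + w2, v3 + w3)%Z)) eqn:E.
  - rewrite !theta_pair_diff_eq, E. rewrite !Cmult_0_l. reflexivity.
  - destruct a as [[a1 a2] a3].
    specialize (Hpar (v1 + w1) (v2 + w2) (v3 + w3) (v1 - w1) (v2 - w2) (v3 - w3) E ltac:(zlia))%Z.
    destruct (M (v1 - w1, v2 - w2, v3 - w3)%Z) as [[e1 e2] e3] eqn:HM.
    rewrite !theta_pair_diff_eq, E.
    match goal with |- _ = Cmult (RtoC (if Z.even (Bi b ?p) then _ else _)) _ =>
      replace (Bi b p) with (Bi b (a1, a2, a3) + Bi b (v1 + w1, v2 + w2, v3 + w3))%Z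
        by (rewrite <- Bi_add_r; f_equal; f_equal; [f_equal|]; zlia) end.
    rewrite Z.even_add, Heven, E. simpl negb. f_equal. f_equal. apply theta_phase_pair.
    + rewrite !Zr_hz, !add3_hz. f_equal. f_equal; [f_equal|]; zlia.
    + rewrite !Zr_hz, !add3_hz, !sub3_hz, !Qr_hz.
      match goal with |- IZR (Qi ?x) / 4 = IZR (Qi ?y) / 4 =>
        replace x with (2 * (v1 - w1), 2 * (v2 - w2), 2 * (v3 - w3))%Z
          by (f_equal; [f_equal|]; ring);
        replace y with (2 * e1, 2 * e2, 2 * e3)%Z by (f_equal; [f_equal|]; zlia) end.
      rewrite !Qi_double, <- HM, HQ. reflexivity.
Qed.

Lemma dominated_minus n f g D1 D2 :
  dominated n f D1 -> dominated n g D2 -> dominated n (fun l => Cminus (f l) (g l)) (D1 + D2).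
Proof.
  intros Hf Hg l Hl. unfold Cminus. eapply Rle_trans; [apply Cmod_triangle|].
  rewrite Cmod_opp. specialize (Hf l Hl). specialize (Hg l Hl). lra.
Qed.

Lemma theta_pair_dominated a b tau z : 0 < Im tau ->
  exists D, 0 <= D /\ dominated 6 (theta_pair (rv a) (rv b) tau z) D.
Proof.
  intros Hy. destruct (theta_summand_dominated a b tau z Hy) as [D [HD Hdom]].
  exists (D * D). split; [nra|]. exact (dominated_mul _ _ _ _ 3 3 Hdom Hdom HD HD).
Qed.

Lemma theta_sq_identity a b M tau z : swap_data b a M -> 0 < Im tau ->
  Cplus (sq (theta (rv (hz a)) (rv (hz b)) tau z))
        (sq (theta (rv (hz (0, 0, 0)%Z)) (rv (hz (0, 0, 0)%Z)) tau z)) =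
  Cplus (sq (theta (rv (hz a)) (rv (hz (0, 0, 0)%Z)) tau z))
        (sq (theta (rv (hz (0, 0, 0)%Z)) (rv (hz b)) tau z)).
Proof.
  intros Hswap Hy. set (o := hz (0, 0, 0)%Z).
  set (S := fun a' b' N => csum (theta_summand (rv a') (rv b') tau z) (cube 3 N)).
  set (X := fun N => Cminus (Cplus (sq (S (hz a) (hz b) N)) (sq (S o o N)))
                            (Cplus (sq (S (hz a) o N)) (sq (S o (hz b) N)))).
  assert (Hlim : Clim X (Cminus
    (Cplus (sq (theta (rv (hz a)) (rv (hz b)) tau z)) (sq (theta (rv o) (rv o) tau z)))
    (Cplus (sq (theta (rv (hz a)) (rv o) tau z)) (sq (theta (rv o) (rv (hz b)) tau z))))).
  { unfold X, Cminus, sq, S.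
    apply Clim_plus; [apply Clim_plus|apply Clim_opp; apply Clim_plus];
      apply Clim_mult; apply theta_Clim; exact Hy. }
  set (F := theta_pair_diff o b tau z).
  assert (HX : forall N, X N = Cminus (csum (fun l => F (swap_list b a M l)) (cube 6 N))
                                      (csum F (cube 6 N))).
  { intros N. unfold X, S. rewrite !sq_csum_cube.
    rewrite (csum_ext (fun l => F (swap_list b a M l)) (theta_pair_diff (hz a) b tau z)).
    2:{ intros l Hl. symmetry. apply theta_pair_diff_swap; auto. eapply cube_length; eauto. }
    unfold F, theta_pair_diff, theta_pair, Cminus. fold o. rewrite !csum_plus, !csum_opp. ring. }
  destruct (theta_pair_dominated o (hz b) tau z Hy) as [D1 [HD1 Hdom1]].
  destruct (theta_pair_dominated o o tau z Hy) as [D2 [HD2 Hdom2]].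
  assert (Hzero : Clim X (RtoC 0)).
  { eapply Clim_ext; [intros N; symmetry; apply HX|].
    apply (csum_cube_reindex_Clim 6 F (D1 + D2) (dominated_minus _ _ _ _ _ Hdom1 Hdom2)
             ltac:(lra) _ (swap_list b (zopp a) M) 4 1).
    - apply swap_list_cancel, Hswap.
    - intros l _. rewrite <- (zopp_involutive a) at 1.
      apply swap_list_cancel, swap_data_opp, Hswap.
    - apply swap_list_cube, Hswap.
    - apply swap_list_cube, swap_data_opp, Hswap. }
  pose proof (Clim_unique _ _ _ Hlim Hzero) as E.
  match goal with |- ?lhs = ?rhs => replace lhs with (Cplus (Cminus lhs rhs) rhs) by (unfold Cminus; ring) end.
  rewrite E. ring.
Qed.

(* isometries of [Q] realising the pairing for [beta = (0,1/2,0)], [(1/2,0,0)], [(1/2,1/2,0)] *)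
Definition iso_010 (x : Z3) : Z3 := let '(x1, x2, x3) := x in (x3, x2, x1).
Definition iso_100 (x : Z3) : Z3 := let '(x1, x2, x3) := x in (- x1 + x2, x2, x2 - x3)%Z.
Definition iso_110 (x : Z3) : Z3 := let '(x1, x2, x3) := x in (- x2 + x3, - x2, x1 - x2)%Z.

Ltac solve_swap_data :=
  split;
  [ intros [[x1 x2] x3]; simpl; f_equal; try f_equal; ring
  | intros [[x1 x2] x3]; simpl; ring
  | reflexivity
  | intros s1 s2 s3 d1 d2 d3 Hodd Hd; rewrite Zeven_mod in Hodd; apply Z.eqb_neq in Hodd;
    cbv beta iota delta [Bi iso_010 iso_100 iso_110] in *; zlia
  | intros K [[x1 x2] x3]; cbv beta iota delta [bounded3 iso_010 iso_100 iso_110]; lia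
  | cbv beta iota delta [bounded3]; lia ].

Lemma swap_data_010 : swap_data (0, 1, 0)%Z (1, 0, 1)%Z iso_010.
Proof. solve_swap_data. Qed.

Lemma swap_data_100 : swap_data (1, 0, 0)%Z (1, 0, 1)%Z iso_100.
Proof. solve_swap_data. Qed.

Lemma swap_data_110 : swap_data (1, 1, 0)%Z (1, 0, 1)%Z iso_110.
Proof. solve_swap_data. Qed.

Lemma IZR0_div2 : IZR 0 / 2 = 0.
Proof. unfold Rdiv. apply Rmult_0_l. Qed.

Lemma theta_sq_identity_AB al be : In al setA -> In be setB ->
  forall tau z, 0 < Im tau ->
  Cplus (sq (theta al be tau z)) (sq (theta zero3 zero3 tau z)) =
  Cplus (sq (theta al zero3 tau z)) (sq (theta zero3 be tau z)).
Proof.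
  intros Ha Hb tau z Hy.
  destruct Ha as [<-|[<-|[]]]; [apply Cplus_comm|].
  destruct Hb as [<-|[<-|[<-|[<-|[]]]]]; [reflexivity| | |];
    [ pose proof (theta_sq_identity _ _ _ tau z swap_data_010 Hy) as H
    | pose proof (theta_sq_identity _ _ _ tau z swap_data_100 Hy) as H
    | pose proof (theta_sq_identity _ _ _ tau z swap_data_110 Hy) as H ];
    unfold hz, rv in H; rewrite !IZR0_div2 in H; exact H.
Qed.

(** * The theta functions on the imaginary axis *)

Definition vec3 (l : list Z) : Z3 :=
  match l with [v1; v2; v3] => (v1, v2, v3) | _ => (0, 0, 0)%Z end.

(* [shift a v = a + 2 v], so that [hz (shift a v) = a / 2 + v] *)
Definition shift (a : Z3) (l : list Z) : Z3 :=
  let '(a1, a2, a3) := a in let '(v1, v2, v3) := vec3 l in (a1 + 2 * v1, a2 + 2 * v2, a3 + 2 * v3)%Z.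

(* [q^(n/4)] for the nome [q = e(i t)] *)
Definition qpow (t : R) (n : Z) : R := exp (- (PI * t * IZR n / 2)).

(* [e(B(b/2, v) + B(a/2 + v, mu/2))], which is a sign when [B(a, mu)] is even *)
Definition axis_sign (a b mu : Z3) (l : list Z) : Z :=
  if Z.even ((2 * Bi b (vec3 l) + Bi (shift a l) mu) / 2) then 1%Z else (-1)%Z.

Definition axis_summand (a b mu : Z3) (t : R) (l : list Z) : R :=
  IZR (axis_sign a b mu l) * qpow t (Qi (shift a l)).

Definition theta_axis (a b mu : Z3) (t : R) : R :=
  Re (theta (rv (hz a)) (rv (hz b)) (0, t) (rv (hz mu))).

Lemma qpow_add t m n : qpow t (m + n) = qpow t m * qpow t n.
Proof. unfold qpow. rewrite <- exp_plus, plus_IZR. f_equal. field. Qed.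

Lemma qpow_pos t n : 0 < qpow t n.
Proof. apply exp_pos. Qed.

Lemma qpow_le_1 t n : 0 <= t -> (0 <= n)%Z -> qpow t n <= 1.
Proof.
  intros Ht Hn. unfold qpow. rewrite <- exp_0. apply exp_le.
  apply IZR_le in Hn. pose proof PI_RGT_0. assert (0 <= PI * t * IZR n) by (apply Rmult_le_pos; nra).
  lra.
Qed.

Lemma qpow_tail t n T : 1 <= t -> (0 <= T <= n)%Z -> qpow t n <= qpow t T * qpow (- 1) T * qpow 1 n.
Proof.
  intros Ht [HT Hn]. apply IZR_le in HT, Hn. unfold qpow. rewrite <- !exp_plus. apply exp_le.
  pose proof PI_RGT_0. assert (0 <= PI * (t - 1) * (IZR n - IZR T)) by (apply Rmult_le_pos; nra).
  nra.
Qed.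

Lemma Br_hz_hz x y : Br (hz x) (hz y) = IZR (Bi x y) / 4.
Proof.
  destruct x as [[x1 x2] x3], y as [[y1 y2] y3]. unfold Br, hz, Bi.
  rewrite !plus_IZR, !mult_IZR, !minus_IZR, !plus_IZR, !opp_IZR, !mult_IZR. field.
Qed.

Lemma add3_hz_Zr a v1 v2 v3 : add3 (hz a) (Zr v1 v2 v3) = hz (shift a [v1; v2; v3]).
Proof. destruct a as [[a1 a2] a3]. rewrite Zr_hz, add3_hz. reflexivity. Qed.

Lemma Bi_shift a mu l : Bi (shift a l) mu = (Bi a mu + 2 * Bi (vec3 l) mu)%Z.
Proof.
  destruct a as [[a1 a2] a3], mu as [[m1 m2] m3]. unfold shift.
  destruct (vec3 l) as [[v1 v2] v3]. unfold Bi. ring.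
Qed.

Lemma theta_summand_axis a b mu t v1 v2 v3 : Z.even (Bi a mu) = true ->
  theta_summand (rv (hz a)) (rv (hz b)) (0, t) (rv (hz mu)) [v1; v2; v3] =
  RtoC (axis_summand a b mu t [v1; v2; v3]).
Proof.
  intros Ha. unfold theta_summand. rewrite theta_term_rv, add3_hz_Zr, Br_hz_Zr.
  set (l := [v1; v2; v3]). set (x := shift a l).
  set (K := (2 * Bi b (vec3 l) + Bi x mu)%Z).
  assert (HK : K = (2 * (K / 2))%Z).
  { unfold K, x. rewrite Bi_shift. rewrite Zeven_mod in Ha. apply Z.eqb_eq in Ha. zlia. }
  replace (theta_phase (hz x) (0, t) (rv (hz mu)))
    with ((IZR (Bi x mu) / 4, t * (IZR (Qi x) / 4)) : C).
  2:{ unfold theta_phase. destruct mu as [[m1 m2] m3].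
      replace (zre (rv (hz (m1, m2, m3)))) with (hz (m1, m2, m3)) by reflexivity.
      replace (zim (rv (hz (m1, m2, m3)))) with ((0, 0, 0) : R3) by reflexivity.
      rewrite Br_hz_hz, Qr_hz. destruct x as [[x1 x2] x3]. unfold Br, Cplus, Cmult, RtoC.
      simpl. f_equal; ring. }
  rewrite ee_real_imag, Cmult_comm, <- Cmult_assoc, ee_add.
  replace (Cplus (RtoC (IZR (Bi x mu) / 4)) (RtoC (IZR (Bi b (v1, v2, v3)) / 2)))
    with (RtoC (IZR (K / 2) / 2)).
  2:{ unfold RtoC, Cplus. f_equal; [|simpl; ring]. apply Rmult_eq_reg_r with 4; [|lra].
      replace (IZR (K / 2) / 2 * 4) with (IZR (2 * (K / 2))) by (rewrite mult_IZR; field).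
      rewrite <- HK. unfold K. rewrite plus_IZR, mult_IZR. cbn [fst]. unfold l. simpl vec3. field. }
  rewrite ee_half_IZR. unfold axis_summand, axis_sign, qpow. fold l x. fold K.
  replace (- (2 * PI * (t * (IZR (Qi x) / 4)))) with (- (PI * t * IZR (Qi x) / 2)) by field.
  destruct (Z.even (K / 2)); unfold RtoC, Cmult; simpl; f_equal; ring.
Qed.

Lemma theta_axis_spec a b mu t : Z.even (Bi a mu) = true -> 0 < t ->
  theta (rv (hz a)) (rv (hz b)) (0, t) (rv (hz mu)) = RtoC (theta_axis a b mu t) /\
  is_lim_seq (fun N => rsum (axis_summand a b mu t) (cube 3 N)) (theta_axis a b mu t).
Proof.
  intros Ha Ht.
  assert (Hpart : forall N, csum (theta_summand (rv (hz a)) (rv (hz b)) (0, t) (rv (hz mu))) (cube 3 N)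
                            = RtoC (rsum (axis_summand a b mu t) (cube 3 N))).
  { intros N. rewrite <- csum_RtoC. apply csum_ext. intros l Hl.
    destruct l as [|v1 [|v2 [|v3 [|]]]]; try discriminate (cube_length _ _ _ Hl).
    apply theta_summand_axis, Ha. }
  destruct (theta_Clim (hz a) (hz b) (0, t) (rv (hz mu)) Ht) as [HRe HIm].
  unfold theta_axis. split.
  - assert (HIm0 : Im (theta (rv (hz a)) (rv (hz b)) (0, t) (rv (hz mu))) = 0).
    { apply (is_lim_seq_ext _ (fun _ => 0)) in HIm; [|intros N; cbv beta; rewrite Hpart; reflexivity].
      apply is_lim_seq_unique in HIm. rewrite Lim_seq_const in HIm. injection HIm. auto. }
    destruct (theta _ _ _ _) as [x y]. simpl in *. subst y. reflexivity.
  - eapply is_lim_seq_ext; [|exact HRe]. intros N. cbv beta. rewrite Hpart. reflexivity.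
Qed.

Lemma is_lim_seq_Rabs_le (u : nat -> R) (l p B : R) N0 : is_lim_seq u l ->
  (forall N, (N0 <= N)%nat -> Rabs (u N - p) <= B) -> Rabs (l - p) <= B.
Proof.
  intros Hu HB.
  assert (H := is_lim_seq_le_loc (fun N => Rabs (u N - p)) (fun _ => B) (Rabs (l - p)) B).
  apply H; [exists N0; exact HB| |apply is_lim_seq_const].
  apply (is_lim_seq_abs (fun N => u N - p) (l - p)). apply is_lim_seq_minus'; auto.
  apply is_lim_seq_const.
Qed.

Definition short_vectors (a : Z3) (T : Z) : list (list Z) :=
  filter (fun l => Qi (shift a l) <? T)%Z (cube 3 3).

Lemma Qi_nonneg x : (0 <= Qi x)%Z.
Proof.
  destruct x as [[x1 x2] x3]. unfold Qi.
  pose proof (Z.square_nonneg x1). pose proof (Z.square_nonneg (x1 - x2)).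
  pose proof (Z.square_nonneg (x2 - x3)). pose proof (Z.square_nonneg x3). nia.
Qed.

Lemma short_vectors_complete a T v1 v2 v3 : bounded3 1 a -> (T <= 9)%Z ->
  (Qi (shift a [v1; v2; v3]) < T)%Z -> In [v1; v2; v3] (short_vectors a T).
Proof.
  intros Ha HT HQ. apply filter_In. split; [|apply Z.ltb_lt; exact HQ].
  destruct a as [[a1 a2] a3]. cbv beta iota delta [bounded3 shift vec3 Qi] in Ha, HQ.
  set (x1 := (a1 + 2 * v1)%Z) in HQ. set (x2 := (a2 + 2 * v2)%Z) in HQ.
  set (x3 := (a3 + 2 * v3)%Z) in HQ.
  assert (H2Q : (2 * (x1 * x1 + x2 * x2 + x3 * x3 - x1 * x2 - x2 * x3)
                 = x1 * x1 + (x1 - x2) * (x1 - x2) + (x2 - x3) * (x2 - x3) + x3 * x3)%Z) by ring.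
  pose proof (Z.square_nonneg x1). pose proof (Z.square_nonneg (x1 - x2)).
  pose proof (Z.square_nonneg (x2 - x3)). pose proof (Z.square_nonneg x3).
  pose proof (Z.square_nonneg (2 * x1 - x2)).
  assert (Hx1 : (x1 * x1 <= 16)%Z) by lia. assert (Hx3 : (x3 * x3 <= 16)%Z) by lia.
  assert (Hx2 : (x2 * x2 <= 2 * (x1 * x1) + 2 * ((x1 - x2) * (x1 - x2)))%Z) by nia.
  assert (Hx2' : (x2 * x2 <= 32)%Z) by lia.
  assert (B1 : (-4 <= x1 <= 4)%Z) by nia. assert (B2 : (-5 <= x2 <= 5)%Z) by nia.
  assert (B3 : (-4 <= x3 <= 4)%Z) by nia.
  apply in_cube. split; [reflexivity|]. unfold x1, x2, x3 in *. repeat constructor; simpl; lia.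
Qed.

Lemma Br_zero_r x : Br x (0, 0, 0) = 0.
Proof. destruct x as [[? ?] ?]. unfold Br. ring. Qed.

(* a vector outside [short_vectors a T] has [Q >= T], so its term is [q^(T/4)] times its term at [t = 1] *)
Lemma axis_summand_tail_le a b mu T : bounded3 1 a -> (0 <= T <= 9)%Z ->
  exists D, 0 <= D /\ forall t l, 1 <= t -> length l = 3%nat -> ~ In l (short_vectors a T) ->
    Rabs (axis_summand a b mu t l) <= qpow t T * (qpow (-1) T * D * cube_weight l).
Proof.
  intros Hab HT.
  destruct (exp_quadratic_dominated 1 (0, 0, 0) (hz a) ltac:(lra)) as [D [HD Hdom]].
  exists D. split; [exact HD|]. intros t l Ht Hl I.
  destruct l as [|v1 [|v2 [|v3 [|]]]]; try discriminate.
  assert (HQ : (T <= Qi (shift a [v1; v2; v3]))%Z).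
  { destruct (Z_lt_le_dec (Qi (shift a [v1; v2; v3])) T) as [L|L]; [|exact L].
    exfalso. apply I. apply short_vectors_complete; auto; lia. }
  unfold axis_summand. rewrite Rabs_mult, (Rabs_pos_eq (qpow _ _)) by (left; apply qpow_pos).
  replace (Rabs (IZR (axis_sign a b mu [v1; v2; v3]))) with 1
    by (unfold axis_sign; destruct (Z.even (_ / 2)); symmetry; [apply Rabs_R1|apply Rabs_m1]).
  rewrite Rmult_1_l. eapply Rle_trans; [apply (qpow_tail t _ T); [exact Ht|lia]|].
  rewrite Rmult_assoc, (Rmult_assoc (qpow (-1) T)).
  apply Rmult_le_compat_l; [left; apply qpow_pos|]. apply Rmult_le_compat_l; [left; apply qpow_pos|].
  specialize (Hdom v1 v2 v3). rewrite add3_hz_Zr, Qr_hz, Br_zero_r in Hdom.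
  unfold qpow. replace (- (PI * 1 * IZR (Qi (shift a [v1; v2; v3])) / 2))
    with (- (2 * PI * (1 * (IZR (Qi (shift a [v1; v2; v3])) / 4) + 0))) by field.
  exact Hdom.
Qed.

Lemma theta_axis_approx a b mu T : Z.even (Bi a mu) = true -> bounded3 1 a -> (0 <= T <= 9)%Z ->
  exists C, forall t, 1 <= t ->
    Rabs (theta_axis a b mu t - rsum (axis_summand a b mu t) (short_vectors a T)) <= C * qpow t T.
Proof.
  intros Ha Hab HT.
  destruct (axis_summand_tail_le a b mu T Hab HT) as [D [HD Htail]].
  exists (qpow (-1) T * D * weight_total ^ 3). intros t Ht.
  destruct (theta_axis_spec a b mu t Ha ltac:(lra)) as [_ Hlim].
  set (E := short_vectors a T) in *. set (s := axis_summand a b mu t) in *.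
  apply (is_lim_seq_Rabs_le _ _ _ _ 3 Hlim). intros N HN. fold s.
  rewrite <- (rsum_restrict s E (cube 3 N)); [| apply NoDup_filter, NoDup_cube | apply NoDup_cube |].
  2:{ intros l Hl. apply filter_In in Hl. eapply cube_incl; [exact HN|tauto]. }
  replace (rsum s (cube 3 N) - rsum (fun l => if memb E l then s l else 0) (cube 3 N))
    with (rsum (fun l => if memb E l then 0 else s l) (cube 3 N))
    by (enough (rsum s (cube 3 N) = rsum (fun l => if memb E l then s l else 0) (cube 3 N)
                                   + rsum (fun l => if memb E l then 0 else s l) (cube 3 N)) by lra;
        rewrite <- rsum_plus; apply rsum_ext; intros l _; destruct (memb E l); ring).
  eapply Rle_trans; [apply Rabs_rsum_le|].
  assert (Hc : 0 <= qpow (-1) T * D) by (pose proof (qpow_pos (-1) T); nra).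
  apply Rle_trans with (rsum (fun l => qpow t T * (qpow (-1) T * D * cube_weight l)) (cube 3 N)).
  - apply rsum_le. intros l Hl. destruct (memb_spec E l) as [I|I].
    + rewrite Rabs_R0. apply Rmult_le_pos; [left; apply qpow_pos|].
      apply Rmult_le_pos; [exact Hc|left; apply cube_weight_pos].
    + apply Htail; auto. exact (cube_length _ _ _ Hl).
  - rewrite rsum_scal, rsum_scal.
    replace (qpow (-1) T * D * weight_total ^ 3 * qpow t T)
      with (qpow t T * (qpow (-1) T * D * weight_total ^ 3)) by ring.
    apply Rmult_le_compat_l; [left; apply qpow_pos|].
    apply Rmult_le_compat_l; [exact Hc|apply rsum_cube_weight_le].
Qed.

Definition zsum {A} (f : A -> Z) (l : list A) : Z := fold_right Z.add 0%Z (map f l).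

Lemma rsum_kronecker (f : Z -> R) k ns : NoDup ns -> In k ns ->
  rsum (fun n => if Z.eqb k n then f n else 0) ns = f k.
Proof.
  induction 1 as [|n ns Hn Hns IH]; intros Hk; [destruct Hk|].
  rewrite rsum_cons. destruct (Z.eqb_spec k n) as [<-|Hkn].
  - rewrite (rsum_ext _ (fun _ => 0)), rsum_const0; [ring|].
    intros m Hm. destruct (Z.eqb_spec k m); [subst; contradiction|reflexivity].
  - destruct Hk as [->|Hk]; [contradiction|]. rewrite IH; auto. ring.
Qed.

Lemma rsum_by_level {A} (s lev : A -> Z) (g : Z -> R) E ns :
  NoDup ns -> (forall x, In x E -> In (lev x) ns) ->
  rsum (fun x => IZR (s x) * g (lev x)) E =
  rsum (fun n => IZR (zsum (fun x => if Z.eqb (lev x) n then s x else 0%Z) E) * g n) ns.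
Proof.
  intros Hns. induction E as [|x E IH]; intros HE.
  - symmetry. rewrite (rsum_ext _ (fun _ => 0)), rsum_const0; [reflexivity|].
    intros n _. apply Rmult_0_l.
  - rewrite rsum_cons, IH by (intros; apply HE; simpl; auto).
    unfold zsum. simpl map. simpl fold_right. symmetry.
    rewrite (rsum_ext _ (fun n => (if Z.eqb (lev x) n then IZR (s x) * g n else 0)
      + IZR (fold_right Z.add 0%Z (map (fun y => if Z.eqb (lev y) n then s y else 0%Z) E)) * g n)).
    + rewrite rsum_plus, rsum_kronecker; auto. apply HE. simpl. auto.
    + intros n _. rewrite plus_IZR. destruct (Z.eqb (lev x) n); ring.
Qed.

Definition axis_coeff (a b mu : Z3) (T n : Z) : Z :=
  zsum (fun l => if Z.eqb (Qi (shift a l)) n then axis_sign a b mu l else 0%Z) (short_vectors a T).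

Lemma rsum_axis_summand_levels a b mu T t ns : NoDup ns ->
  (forall l, In l (short_vectors a T) -> In (Qi (shift a l)) ns) ->
  rsum (axis_summand a b mu t) (short_vectors a T) =
  rsum (fun n => IZR (axis_coeff a b mu T n) * qpow t n) ns.
Proof. apply (rsum_by_level (axis_sign a b mu) (fun l => Qi (shift a l)) (qpow t)). Qed.

Lemma short_vectors_lt a T l : In l (short_vectors a T) -> (Qi (shift a l) < T)%Z.
Proof. unfold short_vectors. rewrite filter_In, Z.ltb_lt. tauto. Qed.

Lemma theta_axis_expansion_origin b mu : exists C, forall t, 1 <= t ->
  Rabs (theta_axis (0, 0, 0)%Z b mu t
        - (IZR (axis_coeff (0, 0, 0)%Z b mu 8 0) + IZR (axis_coeff (0, 0, 0)%Z b mu 8 4) * qpow t 4))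
  <= C * qpow t 8.
Proof.
  destruct (theta_axis_approx (0, 0, 0)%Z b mu 8) as [C HC];
    [destruct mu as [[? ?] ?]; reflexivity|simpl; lia|lia|].
  exists C. intros t Ht. specialize (HC t Ht).
  rewrite (rsum_axis_summand_levels _ _ _ _ _ [0; 4]%Z) in HC.
  - unfold rsum in HC. simpl in HC. unfold qpow at 1 in HC.
    rewrite Rmult_0_r, Rdiv_0_l, Ropp_0, exp_0 in HC.
    rewrite Rmult_1_r, Rplus_0_r in HC. exact HC.
  - repeat constructor; simpl; intuition discriminate.
  - intros l Hl. pose proof (short_vectors_lt _ _ _ Hl) as HQ.
    unfold shift in *. destruct (vec3 l) as [[v1 v2] v3]. rewrite !Z.add_0_l in *.
    rewrite Qi_double in *. pose proof (Qi_nonneg (v1, v2, v3)). cbn [In]. lia.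
Qed.

Lemma theta_axis_expansion_edge mu : exists C, forall t, 1 <= t ->
  Rabs (theta_axis (1, 0, 1)%Z (0, 0, 0)%Z mu t
        - IZR (axis_coeff (1, 0, 1)%Z (0, 0, 0)%Z mu 6 2) * qpow t 2) <= C * qpow t 6.
Proof.
  destruct (theta_axis_approx (1, 0, 1)%Z (0, 0, 0)%Z mu 6) as [C HC]; [|simpl; lia|lia|].
  { destruct mu as [[m1 m2] m3]. unfold Bi. rewrite Zeven_mod. apply Z.eqb_eq. zlia. }
  exists C. intros t Ht. specialize (HC t Ht).
  rewrite (rsum_axis_summand_levels _ _ _ _ _ [2]%Z) in HC.
  - unfold rsum in HC. simpl in HC. rewrite Rplus_0_r in HC. exact HC.
  - repeat constructor. simpl. tauto.
  - intros l Hl. pose proof (short_vectors_lt _ _ _ Hl) as HQ.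
    pose proof (Qi_nonneg (shift (1, 0, 1)%Z l)) as H0.
    unfold shift in *. destruct (vec3 l) as [[v1 v2] v3].
    assert (E : Qi (1 + 2 * v1, 0 + 2 * v2, 1 + 2 * v3)%Z
                = (2 + 4 * (v1 + v1 * v1 + v2 * v2 + v3 + v3 * v3 - v2 - v1 * v2 - v2 * v3))%Z)
      by (unfold Qi; ring).
    rewrite E in *. cbn [In]. lia.
Qed.

(** * Linear independence *)

Definition negligible (f : R -> R) : Prop :=
  exists K, forall t, 1 <= t -> Rabs (f t) <= K * qpow t 8.

Lemma qpow_le_1_ge1 t n : 1 <= t -> (0 <= n)%Z -> 0 < qpow t n <= 1.
Proof. intros Ht Hn. split; [apply qpow_pos|apply qpow_le_1; lra||lia]. Qed.

Lemma Rabs_le_qpow_eq0 c K : (forall t, 1 <= t -> Rabs c <= K * qpow t 4) -> c = 0.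
Proof.
  intros H. destruct (Req_dec c 0) as [|Hc]; [assumption|exfalso].
  pose proof (Rabs_pos_lt c Hc) as Hcp. pose proof PI_RGT_0. pose proof (Rabs_pos K).
  set (t := 1 + Rabs K / Rabs c).
  assert (Ht : 1 <= t) by (unfold t; pose proof (Rdiv_le_0_compat (Rabs K) (Rabs c)); lra).
  specialize (H t Ht). unfold qpow in H.
  replace (- (PI * t * IZR 4 / 2)) with (- (2 * PI * t)) in H by (simpl; field).
  rewrite exp_Ropp in H.
  assert (Hexp : 2 * PI * t <= exp (2 * PI * t)) by (pose proof (exp_ineq1_le (2 * PI * t)); lra).
  assert (Hpos : 0 < 2 * PI * t) by nra.
  assert (HK : K * / exp (2 * PI * t) <= Rabs K / (2 * PI * t)).
  { apply Rle_trans with (Rabs K * / exp (2 * PI * t)).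
    - apply Rmult_le_compat_r; [left; apply Rinv_0_lt_compat, exp_pos|apply Rle_abs].
    - unfold Rdiv. apply Rmult_le_compat_l; [lra|]. apply Rinv_le_contravar; lra. }
  assert (Rabs K / (2 * PI * t) < Rabs c).
  { apply Rmult_lt_reg_r with (2 * PI * t); [lra|].
    replace (Rabs K / (2 * PI * t) * (2 * PI * t)) with (Rabs K) by (field; lra).
    unfold t. replace (Rabs c * (2 * PI * (1 + Rabs K / Rabs c)))
      with (2 * PI * Rabs c + 2 * PI * Rabs K) by (field; lra).
    pose proof PI2_1. nra. }
  lra.
Qed.

Lemma negligible_affine A B : negligible (fun t => A + B * qpow t 4) -> A = 0 /\ B = 0.
Proof.
  intros [K HK].
  assert (Hq8 : forall t, qpow t 8 = qpow t 4 * qpow t 4)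
    by (intros t; rewrite <- qpow_add; reflexivity).
  assert (HA : A = 0).
  { apply (Rabs_le_qpow_eq0 A (Rabs K + Rabs B)). intros t Ht. specialize (HK t Ht).
    destruct (qpow_le_1_ge1 t 4 Ht ltac:(lia)) as [Hq0 Hq1]. rewrite Hq8 in HK.
    pose proof (Rabs_triang (A + B * qpow t 4) (- (B * qpow t 4))) as Htri.
    replace (A + B * qpow t 4 + - (B * qpow t 4)) with A in Htri by ring.
    rewrite Rabs_Ropp, Rabs_mult, (Rabs_pos_eq (qpow t 4)) in Htri by lra.
    assert (K * (qpow t 4 * qpow t 4) <= Rabs K * qpow t 4).
    { apply Rle_trans with (Rabs K * (qpow t 4 * qpow t 4));
        [apply Rmult_le_compat_r; [nra|apply Rle_abs]|].
      pose proof (Rabs_pos K). apply Rmult_le_compat_l; nra. }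
    lra. }
  split; [exact HA|]. subst A.
  apply (Rabs_le_qpow_eq0 B K). intros t Ht. specialize (HK t Ht).
  destruct (qpow_le_1_ge1 t 4 Ht ltac:(lia)) as [Hq0 Hq1].
  rewrite Rplus_0_l, Rabs_mult, (Rabs_pos_eq (qpow t 4)), Hq8 in HK by lra.
  apply Rmult_le_reg_r with (qpow t 4); lra.
Qed.

Lemma negligible_combination (a1 a2 a3 a4 a5 A1 A2 A3 A4 A5 B1 B2 B3 B4 B5 : R)
    (f1 f2 f3 f4 f5 : R -> R) :
  negligible (fun t => f1 t - (A1 + B1 * qpow t 4)) ->
  negligible (fun t => f2 t - (A2 + B2 * qpow t 4)) ->
  negligible (fun t => f3 t - (A3 + B3 * qpow t 4)) ->
  negligible (fun t => f4 t - (A4 + B4 * qpow t 4)) ->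
  negligible (fun t => f5 t - (A5 + B5 * qpow t 4)) ->
  (forall t, 1 <= t -> a1 * f1 t + a2 * f2 t + a3 * f3 t + a4 * f4 t + a5 * f5 t = 0) ->
  a1 * A1 + a2 * A2 + a3 * A3 + a4 * A4 + a5 * A5 = 0 /\
  a1 * B1 + a2 * B2 + a3 * B3 + a4 * B4 + a5 * B5 = 0.
Proof.
  intros [K1 H1] [K2 H2] [K3 H3] [K4 H4] [K5 H5] Hf.
  apply negligible_affine.
  exists (Rabs a1 * K1 + Rabs a2 * K2 + Rabs a3 * K3 + Rabs a4 * K4 + Rabs a5 * K5).
  intros t Ht.
  set (d := fun (a : R) (f : R -> R) A B => a * (f t - (A + B * qpow t 4))).
  replace (a1 * A1 + a2 * A2 + a3 * A3 + a4 * A4 + a5 * A5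
           + (a1 * B1 + a2 * B2 + a3 * B3 + a4 * B4 + a5 * B5) * qpow t 4)
    with (- (d a1 f1 A1 B1 + d a2 f2 A2 B2 + d a3 f3 A3 B3 + d a4 f4 A4 B4 + d a5 f5 A5 B5))
    by (unfold d; specialize (Hf t Ht); lra).
  rewrite Rabs_Ropp.
  assert (Hd : forall a f A B K, Rabs (f t - (A + B * qpow t 4)) <= K * qpow t 8 ->
                                 Rabs (d a f A B) <= Rabs a * K * qpow t 8).
  { intros a f A B K HK. unfold d. rewrite Rabs_mult, Rmult_assoc.
    apply Rmult_le_compat_l; [apply Rabs_pos|exact HK]. }
  pose proof (Hd a1 f1 A1 B1 K1 (H1 t Ht)). pose proof (Hd a2 f2 A2 B2 K2 (H2 t Ht)).
  pose proof (Hd a3 f3 A3 B3 K3 (H3 t Ht)). pose proof (Hd a4 f4 A4 B4 K4 (H4 t Ht)).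
  pose proof (Hd a5 f5 A5 B5 K5 (H5 t Ht)).
  apply Rle_trans with (Rabs a1 * K1 * qpow t 8 + Rabs a2 * K2 * qpow t 8 + Rabs a3 * K3 * qpow t 8
                       + Rabs a4 * K4 * qpow t 8 + Rabs a5 * K5 * qpow t 8); [|right; ring].
  pose proof (Rabs_triang (d a1 f1 A1 B1 + d a2 f2 A2 B2 + d a3 f3 A3 B3 + d a4 f4 A4 B4) (d a5 f5 A5 B5)).
  pose proof (Rabs_triang (d a1 f1 A1 B1 + d a2 f2 A2 B2 + d a3 f3 A3 B3) (d a4 f4 A4 B4)).
  pose proof (Rabs_triang (d a1 f1 A1 B1 + d a2 f2 A2 B2) (d a3 f3 A3 B3)).
  pose proof (Rabs_triang (d a1 f1 A1 B1) (d a2 f2 A2 B2)).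
  lra.
Qed.

Lemma negligible_sq_origin (x : R -> R) A B C :
  (forall t, 1 <= t -> Rabs (x t - (A + B * qpow t 4)) <= C * qpow t 8) ->
  negligible (fun t => x t * x t - (A * A + 2 * A * B * qpow t 4)).
Proof.
  intros H. exists (B * B + 2 * Rabs C * (Rabs A + Rabs B) + C * C). intros t Ht.
  specialize (H t Ht). destruct (qpow_le_1_ge1 t 4 Ht ltac:(lia)) as [Hq0 Hq1].
  set (q := qpow t 4) in *. replace (qpow t 8) with (q * q) in * by (unfold q; rewrite <- qpow_add; reflexivity).
  set (e := x t - (A + B * q)) in *.
  replace (x t * x t - (A * A + 2 * A * B * q)) with (B * B * (q * q) + 2 * (A + B * q) * e + e * e)
    by (unfold e; ring).
  assert (He : Rabs e <= Rabs C * (q * q)) by (eapply Rle_trans; [exact H|]; apply Rmult_le_compat_r; [nra|apply Rle_abs]).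
  assert (Hq2 : q * q <= q) by nra.
  assert (HAB : Rabs (A + B * q) <= Rabs A + Rabs B)
    by (eapply Rle_trans; [apply Rabs_triang|]; rewrite Rabs_mult, (Rabs_pos_eq q) by lra;
        pose proof (Rabs_pos B); nra).
  pose proof (Rabs_pos e). pose proof (Rabs_pos A). pose proof (Rabs_pos B). pose proof (Rabs_pos C).
  assert (T1 : Rabs (B * B * (q * q)) = B * B * (q * q)) by (apply Rabs_pos_eq; nra).
  assert (T2 : Rabs (2 * (A + B * q) * e) <= 2 * Rabs C * (Rabs A + Rabs B) * (q * q)).
  { rewrite !Rabs_mult, (Rabs_pos_eq 2) by lra.
    apply Rle_trans with (2 * (Rabs A + Rabs B) * (Rabs C * (q * q))); [|right; ring].
    pose proof (Rabs_pos (A + B * q)).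
    apply Rmult_le_compat; [lra|apply Rabs_pos|lra|exact He]. }
  assert (T3 : Rabs (e * e) <= C * C * (q * q)).
  { rewrite Rabs_mult.
    apply Rle_trans with (Rabs C * (q * q) * (Rabs C * (q * q))); [apply Rmult_le_compat; lra|].
    assert (HC2 : Rabs C * Rabs C = C * C) by (rewrite <- Rabs_mult; apply Rabs_pos_eq; nra).
    apply Rle_trans with (C * C * (q * q * (q * q))); [right; rewrite <- HC2; ring|].
    apply Rmult_le_compat_l; nra. }
  pose proof (Rabs_triang (B * B * (q * q) + 2 * (A + B * q) * e) (e * e)).
  pose proof (Rabs_triang (B * B * (q * q)) (2 * (A + B * q) * e)).
  nra.
Qed.

Lemma negligible_sq_edge (x : R -> R) m C :
  (forall t, 1 <= t -> Rabs (x t - m * qpow t 2) <= C * qpow t 6) ->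
  negligible (fun t => x t * x t - (0 + m * m * qpow t 4)).
Proof.
  intros H. exists (2 * Rabs m * Rabs C + C * C). intros t Ht.
  specialize (H t Ht). destruct (qpow_le_1_ge1 t 2 Ht ltac:(lia)) as [Hh0 Hh1].
  set (h := qpow t 2) in *.
  assert (E4 : qpow t 4 = h * h) by (unfold h; rewrite <- qpow_add; reflexivity).
  assert (E6 : qpow t 6 = h * h * h) by (unfold h; rewrite <- !qpow_add; reflexivity).
  assert (E8 : qpow t 8 = h * h * h * h) by (unfold h; rewrite <- !qpow_add; reflexivity).
  rewrite E4, E8. rewrite E6 in H.
  set (e := x t - m * h) in *.
  replace (x t * x t - (0 + m * m * (h * h))) with (2 * m * h * e + e * e) by (unfold e; ring).
  pose proof (Rabs_pos e). pose proof (Rabs_pos m). pose proof (Rabs_pos C).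
  assert (He : Rabs e <= Rabs C * (h * h * h))
    by (eapply Rle_trans; [exact H|]; apply Rmult_le_compat_r; [nra|apply Rle_abs]).
  assert (Hh2 : h * h <= 1) by nra.
  assert (Hh4 : 0 <= h * h * h * h) by nra.
  assert (T1 : Rabs (2 * m * h * e) <= 2 * Rabs m * Rabs C * (h * h * h * h)).
  { rewrite !Rabs_mult, (Rabs_pos_eq h), (Rabs_pos_eq 2) by lra.
    apply Rle_trans with (2 * Rabs m * h * (Rabs C * (h * h * h))); [|right; ring].
    apply Rmult_le_compat_l; [nra|exact He]. }
  assert (T2 : Rabs (e * e) <= C * C * (h * h * h * h)).
  { rewrite Rabs_mult.
    apply Rle_trans with (Rabs C * (h * h * h) * (Rabs C * (h * h * h))); [apply Rmult_le_compat; lra|].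
    assert (HC2 : Rabs C * Rabs C = C * C) by (rewrite <- Rabs_mult; apply Rabs_pos_eq; nra).
    apply Rle_trans with (C * C * ((h * h * h * h) * (h * h))); [right; rewrite <- HC2; ring|].
    apply Rmult_le_compat_l; nra. }
  pose proof (Rabs_triang (2 * m * h * e) (e * e)).
  nra.
Qed.

Definition origin_coeff (b mu : Z3) (n : Z) : Z := axis_coeff (0, 0, 0)%Z b mu 8 n.
Definition edge_coeff (mu : Z3) : Z := axis_coeff (1, 0, 1)%Z (0, 0, 0)%Z mu 6 2.

Lemma negligible_sq_theta_origin b mu :
  negligible (fun t => theta_axis (0, 0, 0)%Z b mu t * theta_axis (0, 0, 0)%Z b mu t
    - (IZR (origin_coeff b mu 0) * IZR (origin_coeff b mu 0)
       + 2 * IZR (origin_coeff b mu 0) * IZR (origin_coeff b mu 4) * qpow t 4)).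
Proof.
  destruct (theta_axis_expansion_origin b mu) as [C HC]. exact (negligible_sq_origin _ _ _ C HC).
Qed.

Lemma negligible_sq_theta_edge mu :
  negligible (fun t => theta_axis (1, 0, 1)%Z (0, 0, 0)%Z mu t * theta_axis (1, 0, 1)%Z (0, 0, 0)%Z mu t
    - (0 + IZR (edge_coeff mu) * IZR (edge_coeff mu) * qpow t 4)).
Proof.
  destruct (theta_axis_expansion_edge mu) as [C HC]. exact (negligible_sq_edge _ _ C HC).
Qed.

Section AxisRelations.
Variables (a1 a2 a3 a4 a5 : R).

Definition axis_combination (mu : Z3) (t : R) : R :=
  let th a b := theta_axis a b mu t * theta_axis a b mu t in
  a1 * th (0, 0, 0)%Z (0, 0, 0)%Z + a2 * th (1, 0, 1)%Z (0, 0, 0)%Z + a3 * th (0, 0, 0)%Z (0, 1, 0)%Z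
  + a4 * th (0, 0, 0)%Z (1, 0, 0)%Z + a5 * th (0, 0, 0)%Z (1, 1, 0)%Z.

(* the constant term and the coefficient of [q] of the combination *)
Lemma axis_combination_coeffs mu : (forall t, 1 <= t -> axis_combination mu t = 0) ->
  let c b n := IZR (origin_coeff b mu n) in
  a1 * (c (0, 0, 0)%Z 0%Z * c (0, 0, 0)%Z 0%Z) + a3 * (c (0, 1, 0)%Z 0%Z * c (0, 1, 0)%Z 0%Z)
  + a4 * (c (1, 0, 0)%Z 0%Z * c (1, 0, 0)%Z 0%Z) + a5 * (c (1, 1, 0)%Z 0%Z * c (1, 1, 0)%Z 0%Z) = 0 /\
  a1 * (2 * c (0, 0, 0)%Z 0%Z * c (0, 0, 0)%Z 4%Z) + a2 * (IZR (edge_coeff mu) * IZR (edge_coeff mu))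
  + a3 * (2 * c (0, 1, 0)%Z 0%Z * c (0, 1, 0)%Z 4%Z) + a4 * (2 * c (1, 0, 0)%Z 0%Z * c (1, 0, 0)%Z 4%Z)
  + a5 * (2 * c (1, 1, 0)%Z 0%Z * c (1, 1, 0)%Z 4%Z) = 0.
Proof.
  intros H c.
  destruct (negligible_combination a1 a2 a3 a4 a5 _ _ _ _ _ _ _ _ _ _ _ _ _ _ _
    (negligible_sq_theta_origin (0, 0, 0)%Z mu) (negligible_sq_theta_edge mu)
    (negligible_sq_theta_origin (0, 1, 0)%Z mu) (negligible_sq_theta_origin (1, 0, 0)%Z mu)
    (negligible_sq_theta_origin (1, 1, 0)%Z mu) H) as [HA HB].
  unfold c. split; lra.
Qed.

Lemma axis_combination_trivial :
  (forall mu t, 1 <= t -> axis_combination mu t = 0) ->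
  a1 = 0 /\ a2 = 0 /\ a3 = 0 /\ a4 = 0 /\ a5 = 0.
Proof.
  intros H.
  pose proof (axis_combination_coeffs (0, 0, 0)%Z (H _)) as H0.
  pose proof (axis_combination_coeffs (0, 1, 0)%Z (H _)) as H1.
  pose proof (axis_combination_coeffs (1, 0, 0)%Z (H _)) as H2.
  pose proof (axis_combination_coeffs (1, 1, 0)%Z (H _)) as H3.
  cbv zeta in H0, H1, H2, H3.
  repeat match goal with
  | Hyp : context [origin_coeff ?b ?mu ?n] |- _ =>
      let v := eval vm_compute in (origin_coeff b mu n) in
      replace (origin_coeff b mu n) with v in Hyp by (vm_compute; reflexivity)
  | Hyp : context [edge_coeff ?mu] |- _ =>
      let v := eval vm_compute in (edge_coeff mu) in
      replace (edge_coeff mu) with v in Hyp by (vm_compute; reflexivity)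
  end.
  repeat split; lra.
Qed.

End AxisRelations.

Lemma theta_axis_eq a b mu t : Z.even (Bi a mu) = true -> 0 < t ->
  theta (rv (hz a)) (rv (hz b)) (0, t) (rv (hz mu)) = RtoC (theta_axis a b mu t).
Proof. intros Ha Ht. apply (theta_axis_spec a b mu t Ha Ht). Qed.

Lemma Cmult_sq_RtoC c x : Cmult c (sq (RtoC x)) = (Re c * (x * x), Im c * (x * x)).
Proof. destruct c as [c1 c2]. unfold sq, Cmult, RtoC. simpl. f_equal; ring. Qed.

Lemma theta_sq_independent (c1 c2 c3 c4 c5 : C) :
  (forall (tau : C) (z : C3), 0 < Im tau ->
     Cplus (Cmult c1 (sq (theta zero3 zero3 tau z)))
     (Cplus (Cmult c2 (sq (theta (half, RtoC 0, half) zero3 tau z)))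
     (Cplus (Cmult c3 (sq (theta zero3 (RtoC 0, half, RtoC 0) tau z)))
     (Cplus (Cmult c4 (sq (theta zero3 (half, RtoC 0, RtoC 0) tau z)))
            (Cmult c5 (sq (theta zero3 (half, half, RtoC 0) tau z)))))) = RtoC 0) ->
  c1 = RtoC 0 /\ c2 = RtoC 0 /\ c3 = RtoC 0 /\ c4 = RtoC 0 /\ c5 = RtoC 0.
Proof.
  intros H.
  assert (Hhalves : zero3 = rv (hz (0, 0, 0)%Z) /\ (half, RtoC 0, half) = rv (hz (1, 0, 1)%Z) /\
                    (RtoC 0, half, RtoC 0) = rv (hz (0, 1, 0)%Z) /\
                    (half, RtoC 0, RtoC 0) = rv (hz (1, 0, 0)%Z) /\
                    (half, half, RtoC 0) = rv (hz (1, 1, 0)%Z))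
    by (unfold hz, rv; rewrite !IZR0_div2; repeat split).
  destruct Hhalves as (E0 & EA & E1 & E2 & E3). rewrite E0, EA, E1, E2, E3 in H.
  assert (Hparts : forall mu t, 1 <= t ->
            axis_combination (Re c1) (Re c2) (Re c3) (Re c4) (Re c5) mu t = 0 /\
            axis_combination (Im c1) (Im c2) (Im c3) (Im c4) (Im c5) mu t = 0).
  { intros mu t Ht. specialize (H (0, t) (rv (hz mu)) ltac:(simpl; lra)).
    assert (Hev : forall a, a = (0, 0, 0)%Z \/ a = (1, 0, 1)%Z -> Z.even (Bi a mu) = true).
    { intros a [->| ->]; destruct mu as [[m1 m2] m3]; [reflexivity|].
      unfold Bi. rewrite Zeven_mod. apply Z.eqb_eq. zlia. }
    rewrite !theta_axis_eq, !Cmult_sq_RtoC in H by (auto || lra).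
    unfold axis_combination. cbv zeta.
    split; [apply (f_equal fst) in H|apply (f_equal snd) in H]; simpl in H; lra. }
  destruct (axis_combination_trivial (Re c1) (Re c2) (Re c3) (Re c4) (Re c5))
    as (R1 & R2 & R3 & R4 & R5); [apply Hparts|].
  destruct (axis_combination_trivial (Im c1) (Im c2) (Im c3) (Im c4) (Im c5))
    as (I1 & I2 & I3 & I4 & I5); [apply Hparts|].
  destruct c1, c2, c3, c4, c5. simpl in *. subst. repeat split.
Qed.

Theorem theorem7p13 :
  (* linear independence of theta_{alpha,0}^2 (alpha in A), theta_{0,beta}^2 (beta in B)
     as functions on H x C^3 *)
  (forall c1 c2 c3 c4 c5 : C,
     (forall (tau : C) (z : C3), (0 < Im tau)%R ->
        Cplus (Cmult c1 (sq (theta zero3 zero3 tau z)))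
        (Cplus (Cmult c2 (sq (theta (half, RtoC 0, half) zero3 tau z)))
        (Cplus (Cmult c3 (sq (theta zero3 (RtoC 0, half, RtoC 0) tau z)))
        (Cplus (Cmult c4 (sq (theta zero3 (half, RtoC 0, RtoC 0) tau z)))
               (Cmult c5 (sq (theta zero3 (half, half, RtoC 0) tau z)))))) = RtoC 0) ->
     c1 = RtoC 0 /\ c2 = RtoC 0 /\ c3 = RtoC 0 /\ c4 = RtoC 0 /\ c5 = RtoC 0)
  /\
  (forall al be : C3, In al setA -> In be setB ->
     forall (tau : C) (z : C3), (0 < Im tau)%R ->
       Cplus (sq (theta al be tau z)) (sq (theta zero3 zero3 tau z)) =
       Cplus (sq (theta al zero3 tau z)) (sq (theta zero3 be tau z))).
Proof.
  split.
  - exact theta_sq_independent.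
  - exact theta_sq_identity_AB.
Qed.
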